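(* For every elementary pair $(p,q)$ of partial isomorphisms of $\mathbb{Q}$ and every reduced word $u\in F(s,t)$ there exist a word $v$ and partial isomorphisms $p',q'$ such that $|vu|=|v|+|u|$ and $(p',q',vu)$ liberates $p$ in $(p,q)$; likewise there exist such $v,p',q'$ with $(p',q',vu)$ liberating $q$ in $(p,q)$.
   Context: A partial isomorphism of $\mathbb{Q}$ is an order-preserving bijection $p$ between finite subsets $\mathrm{dom}(p),\mathrm{ran}(p)$ of $\mathbb{Q}$; $p'\supseteq p$ means $p'$ extends $p$; $\mathrm{Fix}(p)=\{c\in\mathrm{dom}(p):p(c)=c\}$. An open interval $(a,b)$ is $p$-increasing if $a,b\in\mathrm{dom}(p)$, $p(a)=a$, $p(b)=b$ and $p(c)>c$ for all $c\in\mathrm{dom}(p)\cap(a,b)$; $p$-decreasing likewise with $p(c)<c$; $p$-monotone means either. Writing $\mathrm{dom}(p)=\{a_0<\dots<a_n\}$, $p$ is informative if $p(a_0)=a_0$, $p(a_n)=a_n$ and there are indices $0=i_0<\dots<i_r=n$ with $p(a_{i_k})=a_{i_k}$ and each $(a_{i_k},a_{i_{k+1}})$ $p$-monotone; then $\mathrm{Ess}(p)=(\mathrm{dom}(p)\cup\mathrm{ran}(p))\setminus\{a_0,a_n\}$. A pair $(p,q)$ is elementary if $p,q$ are informative, $\min\mathrm{dom}(p)=\min\mathrm{dom}(q)$, $\max\mathrm{dom}(p)=\max\mathrm{dom}(q)$, and $\mathrm{Fix}(p)\cap\mathrm{Fix}(q)$ consists only of this min and max. Words: $F(s,t)$ free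 group, $|w|$ reduced length; for reduced $w=t^{n_k}s^{m_k}\cdots t^{n_1}s^{m_1}$, $w(p,q)(c)=q^{n_k}p^{m_k}\cdots q^{n_1}p^{m_1}(c)$ when defined (rightmost letter acts first); ''$w=t^nv$'' means the product is reduced. Liberation: for an elementary pair $(p,q)$, a triple $(p',q',w)$ with $p'\supseteq p$, $q'\supseteq q$ partial isomorphisms and $w$ reduced liberates $p$ in $(p,q)$ if: (i) $p',q'$ are informative; (ii) $\min\mathrm{dom}(p')=\min\mathrm{dom}(p)$, $\min\mathrm{dom}(q')=\min\mathrm{dom}(q)$, $\max\mathrm{dom}(p')=\max\mathrm{dom}(p)$, $\max\mathrm{dom}(q')=\max\mathrm{dom}(q)$; (iii) $w=t^nv$ with $n\neq0$; (iv) $w(p',q')(c)$ is defined for all $c\in\mathrm{Ess}(p)\cup\mathrm{Ess}(q)$ and $w(p',q')(\min(\mathrm{Ess}(p)\cup\mathrm{Ess}(q)))>\max\mathrm{Ess}(p')$; (v) there is an open interval $J$ whose right endpoint is $\max\mathrm{dom}(q)$, with $w(p',q')(c)\in J$ for all $c\in\mathrm{Ess}(p)\cup\mathrm{Ess}(q)$, and $J$ is $q'$-increasing if $n>0$ and $q'$-decreasing if $n<0$. The triple liberates $q$ in $(p,q)$ if the same holds with the roles of $p,q$ and of $s,t$ interchanged (so $w=s^nv$, $n\ne0$, the bound in (iv) is $>\max\mathrm{Ess}(q')$, and $J$ has right endpoint $\max\mathrm{dom}(p)$ and is $p'$-increasing/decreasing according to the sign of $n$). *)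

From HB Require Import structures.
From mathcomp Require Import all_boot all_order all_algebra.
Set Implicit Arguments. Unset Strict Implicit. Unset Printing Implicit Defensive.
Import Order.TTheory GRing.Theory Num.Theory.
Local Open Scope ring_scope.

(* A finite partial map Q -> Q, given by its graph. *)
Definition piso := seq (rat * rat).

Definition dom (p : piso) : seq rat := [seq x.1 | x <- p].
Definition ran (p : piso) : seq rat := [seq x.2 | x <- p].

(* p is an order-preserving bijection between dom p and ran p
   (this also forces p to be functional and injective). *)
Definition partial_iso (p : piso) : Prop :=
  forall x y, x \in p -> y \in p -> (x.1 < y.1) = (x.2 < y.2).

Definition extends (p' p : piso) : Prop := {subset p <= p'}.

Definition papp (p : piso) (c : rat) : option rat :=
  ohead [seq x.2 | x <- p & x.1 == c].
Definition papp_inv (p : piso) (c : rat) : option rat :=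
  ohead [seq x.1 | x <- p & x.2 == c].

Definition fixedp (p : piso) (c : rat) : bool := (c, c) \in p.

Definition dmin (p : piso) : rat := head 0 (sort <=%R (dom p)).
Definition dmax (p : piso) : rat := last 0 (sort <=%R (dom p)).

Definition p_increasing (p : piso) (a b : rat) : Prop :=
  fixedp p a /\ fixedp p b /\
  forall x, x \in p -> a < x.1 < b -> x.2 > x.1.
Definition p_decreasing (p : piso) (a b : rat) : Prop :=
  fixedp p a /\ fixedp p b /\
  forall x, x \in p -> a < x.1 < b -> x.2 < x.1.
Definition p_monotone (p : piso) (a b : rat) : Prop :=
  p_increasing p a b \/ p_decreasing p a b.

(* informative: the chosen fixed points a_{i_0} < ... < a_{i_r} are listed in fs *)
Definition informative (p : piso) : Prop :=
  exists fs : seq rat,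
    [/\ fs != [::], sorted <%R fs,
        head 0 fs = dmin p /\ last 0 fs = dmax p,
        all (fixedp p) fs &
        forall k, (k.+1 < size fs)%N -> p_monotone p (nth 0 fs k) (nth 0 fs k.+1)].

Definition ess (p : piso) (c : rat) : bool :=
  [&& ((c \in dom p) || (c \in ran p)), c != dmin p & c != dmax p].

Definition elementary (p q : piso) : Prop :=
  [/\ partial_iso p /\ partial_iso q, informative p /\ informative q,
      dmin p = dmin q, dmax p = dmax q &
      forall c, (fixedp p c && fixedp q c) <-> (c = dmin p \/ c = dmax p)].

(* Words in F(s,t): a letter is (generator, sign); generator false = s,
   true = t; sign true = exponent +1, false = exponent -1.  A word
   [:: l1; ...; lk] denotes the product l1 ... lk. *)
Definition letter := (bool * bool)%type.
Definition word := seq letter.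
Definition linv (l : letter) : letter := (l.1, ~~ l.2).

Definition reduced (w : word) : bool := sorted (fun x y => y != linv x) w.

Definition reduce (w : word) : word :=
  foldr (fun x acc => match acc with
                      | y :: r => if y == linv x then r else x :: acc
                      | [::] => [:: x] end) [::] w.

Definition wlen (w : word) : nat := size (reduce w).

Definition lact (p q : piso) (l : letter) (c : rat) : option rat :=
  match l with
  | (false, true) => papp p c
  | (false, false) => papp_inv p c
  | (true, true) => papp q c
  | (true, false) => papp_inv q c
  end.

(* w(p,q)(c): the rightmost letter acts first *)
Definition weval (p q : piso) (w : word) (c : rat) : option rat :=
  foldr (fun l oc => obind (lact p q l) oc) (Some c) w.

Definition in_open (a b x : rat) : bool := a < x < b.

Definition liberates_p (p q p' q' : piso) (w : word) : Prop :=
  let E := fun c => ess p c || ess q c in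
  [/\ [/\ extends p' p, extends q' q, partial_iso p' & partial_iso q'],
      informative p' /\ informative q',
      [/\ dmin p' = dmin p, dmin q' = dmin q,
                     dmax p' = dmax p & dmax q' = dmax q],
      (* (iii)+(v) : w = t^n v, n <> 0, sign of n = sign of the first letter *)
      (exists e : bool, exists rest : word, w = (true, e) :: rest /\
         exists a : rat,
           (forall c, E c -> exists d, weval p' q' w c = Some d /\
                                       in_open a (dmax q) d) /\
           (if e then p_increasing q' a (dmax q) else p_decreasing q' a (dmax q))) &
      (forall c, E c -> exists d, weval p' q' w c = Some d) /\
      (forall c, E c -> (forall c', E c' -> c <= c') ->
         forall d, weval p' q' w c = Some d ->
         forall z, ess p' z -> z < d)].

Definition liberates_q (p q p' q' : piso) (w : word) : Prop :=
  let E := fun c => ess p c || ess q c in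
  [/\ [/\ extends p' p, extends q' q, partial_iso p' & partial_iso q'],
      informative p' /\ informative q',
      [/\ dmin p' = dmin p, dmin q' = dmin q,
                     dmax p' = dmax p & dmax q' = dmax q],
      (* (iii)+(v) : w = s^n v, n <> 0 *)
      (exists e : bool, exists rest : word, w = (false, e) :: rest /\
         exists a : rat,
           (forall c, E c -> exists d, weval p' q' w c = Some d /\
                                       in_open a (dmax p) d) /\
           (if e then p_increasing p' a (dmax p) else p_decreasing p' a (dmax p))) &
      (forall c, E c -> exists d, weval p' q' w c = Some d) /\
      (forall c, E c -> (forall c', E c' -> c <= c') ->
         forall d, weval p' q' w c = Some d ->
         forall z, ess q' z -> z < d)].

From HB Require Import structures.
From mathcomp Require Import all_boot all_order all_algebra.
Set Implicit Arguments. Unset Strict Implicit. Unset Printing Implicit Defensive.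
Import Order.TTheory GRing.Theory Num.Theory.
Local Open Scope ring_scope.

(* Let c be the least essential point and M the common maximum.  Extending p and q
   one pair at a time, u(p',q') becomes defined at c.  Then letters are prepended,
   each moving the current point up inside a monotone interval of p' or q', until
   it exceeds all coordinates used so far: a potential counting these coordinates
   above the point decreases, and elementarity guarantees that one of p', q' does
   not fix the point.  The point now lies in the last monotone interval (a, M) of
   q'; subdividing it into rungs and adding the pairs rung_j -> rung_(j+1) to q',
   a power of t carries c close to M.  The remaining essential points are pushed
   along the same word by extensions moving points by at most one rung per letter,
   which keeps the new pairs of p' below the image of c.  Liberating q is the same
   statement for (q, p) with s and t exchanged. *)

Lemma exists_between_notin (R : realFieldType) (Av : seq R) (a b : R) :
  a < b -> exists y, a < y < b /\ y \notin Av.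
Proof.
elim: Av a b => [|x Av IH] a b ab.
  have [h1 h2] := midf_lt ab; exists ((a + b) / 2); by rewrite h1 h2.
have [y [/andP[ay yb] yAv]] := IH _ _ ab.
case: (eqVneq y x) => [yx|yx].
  have [z [/andP[az zy] zAv]] := IH _ _ ay.
  exists z; rewrite az (lt_trans zy yb) in_cons negb_or zAv andbT; split=> //.
  by rewrite -yx (lt_eqF zy).
by exists y; rewrite ay yb in_cons negb_or yx yAv.
Qed.

Lemma exists_seq_max d (T : orderType d) (s : seq T) : s != [::] ->
  exists2 a, a \in s & forall x, x \in s -> (x <= a)%O.
Proof.
elim: s => // x s IH _.
case: (eqVneq s [::]) => [->|sn].
  by exists x; rewrite ?mem_head // => y; rewrite inE => /eqP ->.
have [a ain amax] := IH sn.
case: (leP a x) => ax.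
  exists x; first exact: mem_head.
  by move=> y; rewrite inE => /orP[/eqP->//|/amax ya]; exact: le_trans ya ax.
exists a; first by rewrite inE ain orbT.
move=> y; rewrite inE => /orP[/eqP->|/amax//]; exact: ltW.
Qed.

Lemma exists_seq_min d (T : orderType d) (s : seq T) : s != [::] ->
  exists2 a, a \in s & forall x, x \in s -> (a <= x)%O.
Proof.
elim: s => // x s IH _.
case: (eqVneq s [::]) => [->|sn].
  by exists x; rewrite ?mem_head // => y; rewrite inE => /eqP ->.
have [a ain amin] := IH sn.
case: (leP x a) => ax.
  exists x; first exact: mem_head.
  by move=> y; rewrite inE => /orP[/eqP->//|/amin ay]; exact: le_trans ax ay.
exists a; first by rewrite inE ain orbT.
move=> y; rewrite inE => /orP[/eqP->|/amin//]; exact: ltW.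
Qed.

Lemma exists_separating_notin (R : realFieldType) (Lo Up Av : seq R) :
  (forall l u, l \in Lo -> u \in Up -> l < u) ->
  exists y, [/\ forall l, l \in Lo -> l < y, forall u, u \in Up -> y < u & y \notin Av].
Proof.
move=> H.
suff [a [b [ab Ha Hb]]] : exists a b, [/\ a < b, forall l, l \in Lo -> l <= a &
                                            forall u, u \in Up -> b <= u].
  have [y [/andP[ay yb] yAv]] := exists_between_notin Av ab.
  exists y; split=> //.
    by move=> l /Ha la; apply: le_lt_trans ay.
  by move=> u /Hb bu; apply: lt_le_trans bu.
case: (eqVneq Lo [::]) => [->|Ln]; case: (eqVneq Up [::]) => [->|Un].
- by exists 0, 1.
- have [b bin bmin] := exists_seq_min Un.
  exists (b - 1), b; split=> //.
  by rewrite ltrBlDr ltrDl ltr01.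
- have [a ain amax] := exists_seq_max Ln.
  exists a, (a + 1); split=> //; by rewrite ltrDl ltr01.
- have [a ain amax] := exists_seq_max Ln.
  have [b bin bmin] := exists_seq_min Un.
  by exists a, b; split=> //; apply: H.
Qed.

Lemma partial_iso_fun p x y1 y2 : partial_iso p -> (x, y1) \in p -> (x, y2) \in p -> y1 = y2.
Proof.
move=> P h1 h2.
have e1 := P _ _ h1 h2; have e2 := P _ _ h2 h1; rewrite /= ltxx in e1 e2.
apply/eqP; rewrite eq_le !leNgt -e1 -e2 //.
Qed.

Lemma partial_iso_inj p x1 x2 y : partial_iso p -> (x1, y) \in p -> (x2, y) \in p -> x1 = x2.
Proof.
move=> P h1 h2.
have e1 := P _ _ h1 h2; have e2 := P _ _ h2 h1; rewrite /= ltxx in e1 e2.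
apply/eqP; rewrite eq_le !leNgt e1 e2 //.
Qed.

Lemma partial_iso_le p z w : partial_iso p -> z \in p -> w \in p -> (z.1 <= w.1) = (z.2 <= w.2).
Proof. by move=> P hz hw; rewrite !leNgt (P _ _ hw hz). Qed.

Lemma papp_mem p x y : papp p x = Some y -> (x, y) \in p.
Proof.
rewrite /papp; elim: p => //= [[a b] p IH] /=.
case: ifP => /= [/eqP ->|_]; first by case=> ->; exact: mem_head.
by move/IH => h; rewrite inE h orbT.
Qed.

Lemma papp_none p x : papp p x = None -> forall z, z \in p -> z.1 != x.
Proof.
rewrite /papp; elim: p => //= [[a b] p IH] /=.
case: ifP => //= ax h z; rewrite inE => /orP[/eqP->|]; first by rewrite ax.
exact: IH.
Qed.

Lemma mem_papp p x y : partial_iso p -> (x, y) \in p -> papp p x = Some y.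
Proof.
move=> P h; case E: (papp p x) => [y'|].
  by rewrite (partial_iso_fun P h (papp_mem E)).
by have := papp_none E h; rewrite eqxx.
Qed.

Definition pinv (p : piso) : piso := [seq (z.2, z.1) | z <- p].

Lemma mem_pinv z p : (z \in pinv p) = ((z.2, z.1) \in p).
Proof.
case: z => a b /=; apply/mapP/idP => [[[c d] cp [-> ->]]//|h].
by exists (b, a).
Qed.

Lemma pinvK p : pinv (pinv p) = p.
Proof. by elim: p => //= [[a b] p ->]. Qed.

Lemma papp_invE p c : papp_inv p c = papp (pinv p) c.
Proof.
rewrite /papp_inv /papp; elim: p => //= [[a b] p IH] /=.
by case: ifP => //= _; rewrite IH.
Qed.

Lemma partial_iso_pinv p : partial_iso p -> partial_iso (pinv p).
Proof.
move=> P x y; rewrite !mem_pinv => hx hy; by rewrite (P _ _ hx hy).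
Qed.

Lemma pinv_sub p p' : {subset p <= p'} -> {subset pinv p <= pinv p'}.
Proof. by move=> h z; rewrite !mem_pinv; apply: h. Qed.

Lemma sub_trans (A B C : piso) : {subset A <= B} -> {subset B <= C} -> {subset A <= C}.
Proof. by move=> h1 h2 z /h1/h2. Qed.

Definition letter_iso (l : letter) (P Q : piso) : piso :=
  if l.1 then (if l.2 then Q else pinv Q) else (if l.2 then P else pinv P).

Lemma lactE P Q l c : lact P Q l c = papp (letter_iso l P Q) c.
Proof. by case: l => [[] []] //=; rewrite papp_invE. Qed.

Lemma partial_iso_letter l P Q : partial_iso P -> partial_iso Q -> partial_iso (letter_iso l P Q).
Proof. by case: l => [[] []] /= hP hQ //; apply: partial_iso_pinv. Qed.

Lemma letter_iso_sub l P Q P' Q' : {subset P <= P'} -> {subset Q <= Q'} ->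
  {subset letter_iso l P Q <= letter_iso l P' Q'}.
Proof. by case: l => [[] []] /= hP hQ //; apply: pinv_sub. Qed.

Lemma mem_letter_iso l P Q z : z \in letter_iso l P Q -> z \in P ++ Q \/ (z.2, z.1) \in P ++ Q.
Proof.
case: l => [[] []]; rewrite /letter_iso /= ?mem_pinv => h; [left|right|left|right];
  by rewrite mem_cat h ?orbT.
Qed.

Definition letter_pair (l : letter) (s y : rat) : rat * rat := if l.2 then (s, y) else (y, s).
Definition ext_s (l : letter) (P : piso) (s y : rat) : piso :=
  if l.1 then P else letter_pair l s y :: P.
Definition ext_t (l : letter) (Q : piso) (s y : rat) : piso :=
  if l.1 then letter_pair l s y :: Q else Q.

Lemma letter_iso_ext l P Q s y :
  letter_iso l (ext_s l P s y) (ext_t l Q s y) = (s, y) :: letter_iso l P Q.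
Proof. by case: l => [[] []]. Qed.

Lemma ext_s_sub l P s y : {subset P <= ext_s l P s y}.
Proof. by case: l => [[] b] z //= h; rewrite inE h orbT. Qed.
Lemma ext_t_sub l Q s y : {subset Q <= ext_t l Q s y}.
Proof. by case: l => [[] b] z //= h; rewrite inE h orbT. Qed.

Lemma mem_ext l P Q s y z :
  z \in ext_s l P s y ++ ext_t l Q s y -> z \in P ++ Q \/ z = letter_pair l s y.
Proof.
move=> h; case E: (z == letter_pair l s y); first by right; apply/eqP.
left; move: h; rewrite /ext_s /ext_t !mem_cat; case: l.1; by rewrite ?inE E.
Qed.

Lemma mem_ext_s l P s y z :
  z \in ext_s l P s y -> z \in P \/ (l.1 = false /\ z = letter_pair l s y).
Proof.
rewrite /ext_s; case: l.1 => [|]; first by left.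
rewrite inE => /orP[/eqP->|h]; [by right|by left].
Qed.

Lemma weval_cons P Q l w c : weval P Q (l :: w) c = obind (lact P Q l) (weval P Q w c).
Proof. by []. Qed.

Lemma weval_extend P Q P' Q' w c d : partial_iso P' -> partial_iso Q' ->
  {subset P <= P'} -> {subset Q <= Q'} -> weval P Q w c = Some d -> weval P' Q' w c = Some d.
Proof.
move=> hP hQ sP sQ; elim: w d => //= l w IH d.
case E: (weval P Q w c) => [x|] //=; rewrite (IH _ E) /= !lactE => h.
apply: mem_papp; first exact: partial_iso_letter.
exact: (letter_iso_sub (l:=l) sP sQ (papp_mem h)).
Qed.

Lemma weval_mono P Q w c1 c2 d1 d2 : partial_iso P -> partial_iso Q ->
  weval P Q w c1 = Some d1 -> weval P Q w c2 = Some d2 -> c1 <= c2 -> d1 <= d2.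
Proof.
move=> hP hQ; elim: w d1 d2 => [|l w IH] d1 d2 /=; first by move=> [<-] [<-].
case E1: (weval P Q w c1) => [x1|] //=; case E2: (weval P Q w c2) => [x2|] //=.
rewrite !lactE => h1 h2 c12.
have x12 := IH _ _ E1 E2 c12.
have P' := partial_iso_letter (l:=l) hP hQ.
have := partial_iso_le P' (papp_mem h1) (papp_mem h2); rewrite /= x12.
by move/esym.
Qed.

Lemma papp_head s y (phi : piso) : papp ((s, y) :: phi) s = Some y.
Proof. by rewrite /papp /= eqxx. Qed.

Lemma reduce_reduced w : reduced w -> reduce w = w.
Proof.
elim: w => // l w IH; rewrite /reduced /=.
case: w IH => [|l0 w] IH /= h; first by [].
case/andP: h => h1 h2.
rewrite /reduced /= in IH; rewrite (IH h2).
suff -> : (l0 == linv l) = false by [].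
exact: negbTE.
Qed.

Lemma wlen_reduced w : reduced w -> wlen w = size w.
Proof. by move=> h; rewrite /wlen reduce_reduced. Qed.

Lemma wlen_cat v u : reduced (v ++ u) -> wlen (v ++ u) = (wlen v + wlen u)%N.
Proof.
move=> h; have [hv hu] := cat_sorted2 h.
by rewrite !wlen_reduced // size_cat.
Qed.

Lemma reduced_cons l l0 rest : l0 != linv l -> reduced (l0 :: rest) -> reduced (l :: l0 :: rest).
Proof. by move=> h r; rewrite /reduced /= h. Qed.

Lemma neq_linv_gen l0 l : l0.1 != l.1 -> l0 != linv l.
Proof. by apply: contraNneq => ->. Qed.

Definition coords (P : piso) : seq rat := [seq z.1 | z <- P] ++ [seq z.2 | z <- P].

Lemma coordsP (P : piso) z : z \in P -> z.1 \in coords P /\ z.2 \in coords P.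
Proof. by move=> h; rewrite /coords !mem_cat !map_f ?orbT. Qed.

Lemma coordsE (P : piso) c : c \in coords P -> exists2 z, z \in P & c = z.1 \/ c = z.2.
Proof.
rewrite /coords mem_cat => /orP[] /mapP[z hz ->]; exists z => //; by [left|right].
Qed.

Lemma coords_sub (P P' : piso) c : {subset P <= P'} -> c \in coords P -> c \in coords P'.
Proof. by move=> s /coordsE [z /s hz [->|->]]; case: (coordsP hz). Qed.

Section Sorted.
Variable fs : seq rat.
Hypothesis sfs : sorted <%R fs.

Lemma sorted_nth_lt i j : (i < size fs)%N -> (j < size fs)%N ->
  (nth 0 fs i < nth 0 fs j) = (i < j)%N.
Proof. by move=> hi hj; apply: (lt_sorted_ltn_nth 0 sfs). Qed.

Lemma sorted_nth_le i j : (i < size fs)%N -> (j < size fs)%N ->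
  (nth 0 fs i <= nth 0 fs j) = (i <= j)%N.
Proof. by move=> hi hj; apply: (lt_sorted_leq_nth 0 sfs). Qed.

Lemma head_nth : fs != [::] -> head 0 fs = nth 0 fs 0.
Proof. by case: fs. Qed.

Lemma last_nth : fs != [::] -> last 0 fs = nth 0 fs (size fs).-1.
Proof. by case: fs => // a s _; rewrite (last_nth 0) /=. Qed.

Lemma sorted_head_le_nth i : (i < size fs)%N -> head 0 fs <= nth 0 fs i.
Proof.
move=> hi; have ne : fs != [::] by case: fs hi.
by rewrite head_nth // sorted_nth_le // (leq_ltn_trans _ hi).
Qed.

Lemma sorted_nth_le_last i : (i < size fs)%N -> nth 0 fs i <= last 0 fs.
Proof.
move=> hi; have ne : fs != [::] by case: fs hi.
have hs : ((size fs).-1 < size fs)%N by case: (size fs) hi.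
by rewrite last_nth // sorted_nth_le // -ltnS prednK // (leq_ltn_trans _ hi).
Qed.

Lemma sorted_gap s : head 0 fs < s -> s < last 0 fs -> s \notin fs ->
  exists k, (k.+1 < size fs)%N /\ nth 0 fs k < s < nth 0 fs k.+1.
Proof.
move: sfs; elim: fs => [_ hs sl|a t IH st /= hs]; first by move: (lt_trans hs sl); rewrite /= ltxx.
case: t st IH => [|b t] st IH sl; first by move: (lt_trans hs sl); rewrite /= ltxx.
rewrite inE negb_or => /andP[sa sn].
case: (ltgtP s b) => sb.
- by exists 0%N; rewrite /= hs sb.
- have st' : sorted <%R (b :: t) by case/andP: st.
  have [k [hk hk2]] := IH st' sb sl sn.
  by exists k.+1.
- by move: sn; rewrite sb inE eqxx.
Qed.

Lemma sorted_gap_uniq s k j : (k.+1 < size fs)%N -> (j.+1 < size fs)%N ->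
  nth 0 fs k < s < nth 0 fs k.+1 -> nth 0 fs j < s < nth 0 fs j.+1 -> k = j.
Proof.
move=> hk hj /andP[a1 a2] /andP[b1 b2].
have hk' : (k < size fs)%N by apply: ltnW.
have hj' : (j < size fs)%N by apply: ltnW.
apply/eqP; rewrite eqn_leq; apply/andP; split.
  rewrite -ltnS -(sorted_nth_lt hk' hj); exact: lt_trans a1 b2.
rewrite -ltnS -(sorted_nth_lt hj' hk); exact: lt_trans b1 a2.
Qed.

End Sorted.

Definition in_gap (fs : seq rat) (x : rat) (k : nat) : bool :=
  (k.+1 < size fs)%N && (nth 0 fs k < x < nth 0 fs k.+1).

Lemma gap_notin fs x k : sorted <%R fs -> in_gap fs x k -> x \notin fs.
Proof.
move=> st /andP[hk /andP[h1 h2]]; apply/negP => /(nthP 0)[j hj ej].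
have hk' : (k < size fs)%N by apply: ltnW.
rewrite -ej (sorted_nth_lt st hk' hj) in h1; rewrite -ej (sorted_nth_lt st hj hk) in h2.
by move: h2; rewrite ltnS leqNgt h1.
Qed.

Lemma gap_ends_at_last fs x k : sorted <%R fs -> in_gap fs x k ->
  (forall f, f \in fs -> f < last 0 fs -> f < x) -> nth 0 fs k.+1 = last 0 fs.
Proof.
move=> st /andP[hk /andP[_ xb]] below; apply/eqP; rewrite eq_le sorted_nth_le_last //=.
by rewrite leNgt; apply/negP => /(below _ (mem_nth 0 hk)); rewrite ltNge (ltW xb).
Qed.

Lemma gap_uniq fs x k j : sorted <%R fs -> in_gap fs x k -> in_gap fs x j -> k = j.
Proof.
move=> st /andP[hk hk2] /andP[hj hj2]; exact (sorted_gap_uniq st hk hj hk2 hj2).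
Qed.

(* An informative phi with its chosen fixed points fs; dir k tells whether the
   k-th interval (fs_k, fs_(k+1)) is increasing or decreasing. *)
Definition layout (phi : piso) (fs : seq rat) (dir : nat -> bool) : Prop :=
  [/\ partial_iso phi, sorted <%R fs /\ fs != [::], all (fun c => (c, c) \in phi) fs,
      (forall z, z \in phi -> head 0 fs <= z.1 <= last 0 fs) &
      (forall k z, (k.+1 < size fs)%N -> z \in phi -> nth 0 fs k < z.1 < nth 0 fs k.+1 ->
         if dir k then z.1 < z.2 else z.2 < z.1)].

Section LayoutTheory.
Variables (phi : piso) (fs : seq rat) (dir : nat -> bool).
Hypothesis S : layout phi fs dir.

Lemma layout_piso : partial_iso phi. Proof. by case: S. Qed.
Lemma layout_sorted : sorted <%R fs. Proof. by case: S => _ []. Qed.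
Lemma layout_ne : fs != [::]. Proof. by case: S => _ []. Qed.

Lemma layout_fix c : c \in fs -> (c, c) \in phi.
Proof. by case: S => _ _ /allP h _ _; apply: h. Qed.

Lemma layout_nth_fix k : (k < size fs)%N -> (nth 0 fs k, nth 0 fs k) \in phi.
Proof. by move=> h; apply: layout_fix; apply: mem_nth. Qed.

Lemma layout_dom z : z \in phi -> head 0 fs <= z.1 <= last 0 fs.
Proof. by case: S => _ _ _ h _; apply: h. Qed.

Lemma layout_head_fix : (head 0 fs, head 0 fs) \in phi.
Proof. by apply: layout_fix; case: fs layout_ne => //= a s _; rewrite mem_head. Qed.

Lemma layout_last_fix : (last 0 fs, last 0 fs) \in phi.
Proof. by apply: layout_fix; case: fs layout_ne => //= a s _; rewrite mem_last. Qed.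

Lemma layout_ran z : z \in phi -> head 0 fs <= z.2 <= last 0 fs.
Proof.
move=> hz; have /andP[h1 h2] := layout_dom hz.
have e1 := partial_iso_le layout_piso layout_head_fix hz.
have e2 := partial_iso_le layout_piso hz layout_last_fix.
by rewrite /= in e1 e2; rewrite -e1 -e2 h1 h2.
Qed.

Lemma layout_fix_dom z : z \in phi -> z.1 \in fs -> z.2 = z.1.
Proof.
case: z => a b hz ha; have := layout_fix ha => h.
by rewrite /= (partial_iso_fun layout_piso hz h).
Qed.

Lemma layout_fix_ran z : z \in phi -> z.2 \in fs -> z.1 = z.2.
Proof.
case: z => a b hz hb; have := layout_fix hb => h.
by rewrite /= (partial_iso_inj layout_piso hz h).
Qed.

Lemma layout_gap_image k z : (k.+1 < size fs)%N -> z \in phi ->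
  nth 0 fs k < z.1 < nth 0 fs k.+1 -> nth 0 fs k < z.2 < nth 0 fs k.+1.
Proof.
move=> hk hz /andP[h1 h2].
have f1 := layout_nth_fix (ltnW hk); have f2 := layout_nth_fix hk.
have e1 := layout_piso f1 hz; have e2 := layout_piso hz f2.
by rewrite /= in e1 e2; rewrite -e1 -e2 h1 h2.
Qed.

Lemma layout_dir k z : (k.+1 < size fs)%N -> z \in phi -> nth 0 fs k < z.1 < nth 0 fs k.+1 ->
  if dir k then z.1 < z.2 else z.2 < z.1.
Proof. by case: S => _ _ _ _ h; apply: h. Qed.

Lemma layout_up k x T : (k.+1 < size fs)%N ->
  nth 0 fs k < x -> x <= T -> T < nth 0 fs k.+1 -> dir k ->
  (forall z, z \in phi -> x < z.1 -> z.1 <= T -> T < z.2) ->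
  forall z, z \in phi -> x < z.1 -> T < z.2.
Proof.
move=> hk ax xT Tb dk H z hz xz.
case: (leP z.1 T) => [zT|Tz]; first exact: H.
have fb := layout_nth_fix hk.
case: (ltgtP z.1 (nth 0 fs k.+1)) => zb.
- have := layout_dir hk hz; rewrite dk (lt_trans ax xz) zb => /(_ isT) h.
  exact: lt_trans Tz h.
- have e := layout_piso fb hz; rewrite /= zb in e.
  exact: lt_trans Tb (esym e).
- case: z hz xz Tz zb => a b hz /= _ _ ab; rewrite ab in hz.
  by rewrite (partial_iso_fun layout_piso hz fb).
Qed.

Lemma layout_down k x : (k.+1 < size fs)%N ->
  nth 0 fs k < x -> x < nth 0 fs k.+1 -> dir k = false ->
  forall z, z \in phi -> z.1 < x -> z.2 < x.
Proof.
move=> hk ax xb dk z hz zx.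
have fa := layout_nth_fix (ltnW hk).
case: (ltgtP z.1 (nth 0 fs k)) => za.
- have e := layout_piso hz fa; rewrite /= za in e.
  exact: lt_trans (esym e) ax.
- have := layout_dir hk hz; rewrite dk za (lt_trans zx xb) => /(_ isT) h.
  exact: lt_trans h zx.
- case: z hz zx za => a b hz /= _ ab; rewrite ab in hz.
  by rewrite (partial_iso_fun layout_piso hz fa).
Qed.

Lemma layout_gap_monotone k : (k.+1 < size fs)%N ->
  if dir k then p_increasing phi (nth 0 fs k) (nth 0 fs k.+1)
  else p_decreasing phi (nth 0 fs k) (nth 0 fs k.+1).
Proof.
move=> hk; have f1 := layout_nth_fix (ltnW hk); have f2 := layout_nth_fix hk.
case E: (dir k); (split; [done|split; [done|]]) => x hx hin;
  by have := layout_dir hk hx hin; rewrite E.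
Qed.

Lemma layout_top_or_below z x : z \in phi ->
  (z.1 < last 0 fs -> z.1 <= x) -> (z.2 < last 0 fs -> z.2 <= x) ->
  z = (last 0 fs, last 0 fs) \/ (z.1 <= x /\ z.2 <= x).
Proof.
move=> hz h1 h2.
have lastin : last 0 fs \in fs by case: fs layout_ne => //= a t _; rewrite mem_last.
have /andP[_ z1M] := layout_dom hz; have /andP[_ z2M] := layout_ran hz.
case: (ltgtP z.1 (last 0 fs)) z1M => // [lt1 _|e1 _].
  case: (ltgtP z.2 (last 0 fs)) z2M => // [lt2 _|e2 _]; first by right; split; auto.
  by have := layout_fix_ran hz; rewrite e2 => /(_ lastin) e; rewrite e ltxx in lt1.
left; have e2 := layout_fix_dom hz; rewrite e1 in e2; move: (e2 lastin) e1.
by case: z {hz h1 h2 z2M e2} => a b /= -> ->.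
Qed.

Lemma layout_gap_sides k s : (k.+1 < size fs)%N -> nth 0 fs k < s < nth 0 fs k.+1 ->
  (dir k -> forall z, z \in phi -> s < z.1 -> s < z.2) /\
  (dir k = false -> forall z, z \in phi -> z.1 < s -> z.2 < s).
Proof.
move=> hk /andP[hs1 hs2]; split=> dk; last exact: layout_down hk hs1 hs2 dk.
apply: (layout_up hk hs1 (lexx s) hs2 dk).
by move=> z _ a b; move: (lt_le_trans a b); rewrite ltxx.
Qed.

End LayoutTheory.

Lemma layout_pinv phi fs dir : layout phi fs dir -> layout (pinv phi) fs (fun k => ~~ dir k).
Proof.
move=> S; split.
- exact: partial_iso_pinv (layout_piso S).
- by split; [exact: layout_sorted S|exact: layout_ne S].
- by apply/allP => c hc; rewrite mem_pinv /=; exact (layout_fix S hc).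
- by move=> z; rewrite mem_pinv => hz; have := layout_ran S hz.
- move=> k z hk; rewrite mem_pinv => hz hin.
  have f1 := layout_nth_fix S (ltnW hk); have f2 := layout_nth_fix S hk.
  have e1 := layout_piso S f1 hz; have e2 := layout_piso S hz f2; rewrite /= in e1 e2.
  have hin2 : nth 0 fs k < z.2 < nth 0 fs k.+1 by rewrite e1 e2.
  have := layout_dir S hk hz; rewrite /= => /(_ hin2); by case: (dir k).
Qed.

Lemma layout_dir_ext phi fs d1 d2 : (forall k, d1 k = d2 k) -> layout phi fs d1 -> layout phi fs d2.
Proof.
move=> e [h1 h2 h3 h4 h5]; split=> // k z hk hz hin; rewrite -e; exact: h5.
Qed.

Lemma layout_cons phi fs dir s y k : layout phi fs dir -> (k.+1 < size fs)%N ->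
  nth 0 fs k < s < nth 0 fs k.+1 ->
  (forall z, z \in phi -> z.1 != s) ->
  (forall z, z \in phi -> z.1 < s -> z.2 < y) ->
  (forall z, z \in phi -> s < z.1 -> y < z.2) ->
  (if dir k then s < y else y < s) -> layout ((s, y) :: phi) fs dir.
Proof.
move=> S hk hs ns Hlo Hup hd.
have P := layout_piso S.
have key : forall z, z \in phi -> (s < z.1) = (y < z.2) /\ (z.1 < s) = (z.2 < y).
  move=> z hz; case: (ltgtP s z.1) => sz.
  - by have := Hup _ hz sz => h; rewrite h (lt_gtF h).
  - by have := Hlo _ hz sz => h; rewrite h (lt_gtF h).
  - by have := ns _ hz; rewrite sz eqxx.
split.
- move=> a b; rewrite !inE => /orP[/eqP->|ha] /orP[/eqP->|hb] //=.
  + by rewrite !ltxx.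
  + by case: (key _ hb).
  + by case: (key _ ha).
  + exact: P.
- by split; [exact: layout_sorted S|exact: layout_ne S].
- by apply/allP => c hc; rewrite inE (layout_fix S hc) orbT.
- move=> z; rewrite inE => /orP[/eqP->|hz] /=; last exact (layout_dom S hz).
  case/andP: hs => h1 h2; apply/andP; split.
    have hh := sorted_head_le_nth (layout_sorted S) (ltnW hk); exact: le_trans hh (ltW h1).
  have hh := sorted_nth_le_last (layout_sorted S) hk; exact: le_trans (ltW h2) hh.
- move=> j z hj; rewrite inE => /orP[/eqP->|hz] /= hin; last exact (layout_dir S hj hz hin).
  by rewrite -(sorted_gap_uniq (layout_sorted S) hk hj hs hin).
Qed.

Lemma layout_cons_exists phi fs dir s k (eLo eUp Av : seq rat) :
  layout phi fs dir -> (k.+1 < size fs)%N -> nth 0 fs k < s < nth 0 fs k.+1 ->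
  (forall l, l \in eLo -> (forall z, z \in phi -> s < z.1 -> l < z.2) /\ (~~ dir k -> l < s)) ->
  (forall u, u \in eUp -> (forall z, z \in phi -> z.1 < s -> z.2 < u) /\ (dir k -> s < u)) ->
  (forall l u, l \in eLo -> u \in eUp -> l < u) ->
  exists y, [/\ forall z, z \in phi -> z.1 < s -> z.2 < y,
                forall z, z \in phi -> s < z.1 -> y < z.2,
                (if dir k then s < y else y < s),
                (forall l, l \in eLo -> l < y) /\ (forall u, u \in eUp -> y < u) & y \notin Av].
Proof.
move=> S hk hs HL HU HLU.
have P := layout_piso S.
set Lo := [seq z.2 | z <- phi & z.1 < s] ++ (if dir k then [:: s] else [::]) ++ eLo.
set Up := [seq z.2 | z <- phi & s < z.1] ++ (if dir k then [::] else [:: s]) ++ eUp.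
have [upl downl] := layout_gap_sides S hk hs.
have [y [yL yU yA]] :
    exists y, [/\ forall l, l \in Lo -> l < y, forall u, u \in Up -> y < u & y \notin Av].
  apply: exists_separating_notin => l u; rewrite !mem_cat => hl hu.
  case/orP: hl => [/mapP[z]|hl].
    rewrite mem_filter => /andP[zs hz] ->.
    case/orP: hu => [/mapP[w]|hu].
      rewrite mem_filter => /andP[sw hw] ->.
      by have := P _ _ hz hw; rewrite (lt_trans zs sw) => <-.
    case/orP: hu => [|hu]; last by case: (HU _ hu) => h _; apply: h.
    by case E: (dir k) => //; rewrite inE => /eqP ->; apply: downl.
  case/orP: hl => [|hl].
    case E: (dir k) => //; rewrite inE => /eqP ->.
    case/orP: hu => [/mapP[w]|hu].
      by rewrite mem_filter => /andP[sw hw] ->; apply: upl.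
    case/orP: hu => [|hu]; first by rewrite E in_nil.
    by case: (HU _ hu) => _ h; apply: h; rewrite E.
  case/orP: hu => [/mapP[w]|hu].
    by rewrite mem_filter => /andP[sw hw] ->; case: (HL _ hl) => h _; apply: h.
  case/orP: hu => [|hu]; last exact: HLU.
  by case E: (dir k) => //; rewrite inE => /eqP ->; case: (HL _ hl) => _ h; apply: h; rewrite E.
exists y; split.
- move=> z hz zs; apply: yL; rewrite mem_cat; apply/orP; left.
  by apply/mapP; exists z => //; rewrite mem_filter zs hz.
- move=> z hz zs; apply: yU; rewrite mem_cat; apply/orP; left.
  by apply/mapP; exists z => //; rewrite mem_filter zs hz.
- case E: (dir k).
    by apply: yL; rewrite !mem_cat E inE eqxx orbT.
  by apply: yU; rewrite !mem_cat E inE eqxx orbT.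
- by split=> [l hl|u hu]; [apply: yL|apply: yU]; rewrite !mem_cat ?hl ?hu !orbT.
- exact: yA.
Qed.

Lemma sorted_head_le (s : seq rat) x : sorted <=%R s -> x \in s -> head 0 s <= x.
Proof.
case: s => // a t /= st; rewrite inE => /orP[/eqP->//|xt].
have := order_path_min (@le_trans _ rat) st => /allP; by apply.
Qed.

Lemma sorted_le_last (s : seq rat) x : sorted <=%R s -> x \in s -> x <= last 0 s.
Proof.
case: s => // a t /=; elim: t a x => [|b t IH] a x /=.
  by move=> _; rewrite inE => /eqP->.
case/andP=> ab st; rewrite inE => /orP[/eqP->|xt].
  apply: (le_trans ab); exact: IH _ _ st (mem_head _ _).
exact: IH _ _ st xt.
Qed.

Lemma dmin_le p z : z \in p -> dmin p <= z.1.
Proof.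
move=> hz; rewrite /dmin; apply: sorted_head_le; first exact: sort_le_sorted.
by rewrite mem_sort; apply/mapP; exists z.
Qed.

Lemma dmax_ge p z : z \in p -> z.1 <= dmax p.
Proof.
move=> hz; rewrite /dmax; apply: sorted_le_last; first exact: sort_le_sorted.
by rewrite mem_sort; apply/mapP; exists z.
Qed.

Lemma dmin_mem p : p != [::] -> dmin p \in dom p.
Proof.
move=> ne; rewrite /dmin -(mem_sort <=%R (dom p)).
case E: (sort _ _) => [|a t]; last by rewrite mem_head.
by move/(congr1 size): E; rewrite size_sort size_map /= => /eqP; rewrite size_eq0 (negbTE ne).
Qed.

Lemma dmax_mem p : p != [::] -> dmax p \in dom p.
Proof.
move=> ne; rewrite /dmax -(mem_sort <=%R (dom p)).
case E: (sort _ _) => [|a t]; last by rewrite /= mem_last.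
by move/(congr1 size): E; rewrite size_sort size_map /= => /eqP; rewrite size_eq0 (negbTE ne).
Qed.

Lemma dmin_eq p a : (a, a) \in p -> (forall z, z \in p -> a <= z.1) -> dmin p = a.
Proof.
move=> ha H; have ne : p != [::] by case: p ha H.
have /mapP[z hz e] := dmin_mem ne.
apply/eqP; rewrite eq_le; have := dmin_le ha; rewrite /= => ->; by rewrite e H.
Qed.

Lemma dmax_eq p a : (a, a) \in p -> (forall z, z \in p -> z.1 <= a) -> dmax p = a.
Proof.
move=> ha H; have ne : p != [::] by case: p ha H.
have /mapP[z hz e] := dmax_mem ne.
apply/eqP; rewrite eq_le; have := dmax_ge ha; rewrite /= => ->; by rewrite e H.
Qed.

Lemma layout_dmin phi fs dir : layout phi fs dir -> dmin phi = head 0 fs.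
Proof.
move=> S; apply: dmin_eq; first exact: layout_head_fix S.
by move=> z hz; case/andP: (layout_dom S hz).
Qed.

Lemma layout_dmax phi fs dir : layout phi fs dir -> dmax phi = last 0 fs.
Proof.
move=> S; apply: dmax_eq; first exact: layout_last_fix S.
by move=> z hz; case/andP: (layout_dom S hz).
Qed.

Lemma layout_informative phi fs dir : layout phi fs dir -> informative phi.
Proof.
move=> S; exists fs; split.
- exact: layout_ne S.
- exact: layout_sorted S.
- by rewrite (layout_dmin S) (layout_dmax S).
- by apply/allP => c hc; rewrite /fixedp; exact (layout_fix S hc).
- by move=> k hk; have := layout_gap_monotone S hk; case: (dir k); [left|right].
Qed.

Definition increasing_on (p : piso) (a b : rat) : bool :=
  all (fun x => (a < x.1 < b) ==> (x.1 < x.2)) p.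

Lemma informative_layout p : partial_iso p -> informative p ->
  exists fs dir, [/\ layout p fs dir, head 0 fs = dmin p & last 0 fs = dmax p].
Proof.
move=> P [fs [ne st [hh hl] fx mono]].
exists fs, (fun k => increasing_on p (nth 0 fs k) (nth 0 fs k.+1)); split=> //.
split=> //.
- move=> z hz; rewrite hh hl dmin_le ?dmax_ge //.
- move=> k z hk hz hin; case E: (increasing_on _ _ _).
    by move/allP: E => /(_ z hz); rewrite hin.
  case: (mono k hk) => [[_ [_ h]]|[_ [_ h]]]; last exact: h.
  move: E; suff -> : increasing_on p (nth 0 fs k) (nth 0 fs k.+1) by [].
  by apply/allP => x hx; apply/implyP => hx2; apply: h.
Qed.

Lemma elementary_layouts p q : elementary p q ->
  exists fsP dirP fsQ dirQ,
    [/\ layout p fsP dirP, layout q fsQ dirQ,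
        head 0 fsP = dmin p /\ last 0 fsP = dmax p,
        head 0 fsQ = dmin p /\ last 0 fsQ = dmax p &
        forall c, c \in fsP -> c \in fsQ -> c = dmin p \/ c = dmax p].
Proof.
case=> [[Pp Pq] [Ip Iq] emin emax fixc].
have [fsP [dirP [SP hP lP]]] := informative_layout Pp Ip.
have [fsQ [dirQ [SQ hQ lQ]]] := informative_layout Pq Iq.
exists fsP, dirP, fsQ, dirQ; split=> //.
  by rewrite hQ lQ emin emax.
move=> c cP cQ; apply/fixc; rewrite /fixedp.
by rewrite (layout_fix SP cP) (layout_fix SQ cQ).
Qed.

Section Admissible.
Variables (p q : piso) (fsP fsQ : seq rat) (dirP dirQ : nat -> bool) (m M : rat).
Hypothesis hP : head 0 fsP = m.
Hypothesis lP : last 0 fsP = M.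
Hypothesis hQ : head 0 fsQ = m.
Hypothesis lQ : last 0 fsQ = M.

Definition letter_fix (l : letter) := if l.1 then fsQ else fsP.
Definition letter_dir (l : letter) k :=
  if l.1 then (if l.2 then dirQ k else ~~ dirQ k) else (if l.2 then dirP k else ~~ dirP k).

(* Extensions of p and q keeping the chosen fixed points and directions, hence
   informative with the same extreme points. *)
Definition admissible (P Q : piso) :=
  [/\ layout P fsP dirP, layout Q fsQ dirQ, {subset p <= P} & {subset q <= Q}].

Lemma head_letter_fix l : head 0 (letter_fix l) = m. Proof. by rewrite /letter_fix; case: l.1. Qed.
Lemma last_letter_fix l : last 0 (letter_fix l) = M. Proof. by rewrite /letter_fix; case: l.1. Qed.

Lemma admissible_layout l P Q :
  admissible P Q -> layout (letter_iso l P Q) (letter_fix l) (letter_dir l).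
Proof.
case=> SP SQ _ _; case: l => [[] []]; rewrite /letter_iso /letter_fix /letter_dir /= //;
  by apply: layout_pinv.
Qed.

Lemma admissible_letter_piso l P Q : admissible P Q -> partial_iso (letter_iso l P Q).
Proof. by move/(admissible_layout l)/layout_piso. Qed.

Lemma admissible_ext l P Q s y : admissible P Q ->
  layout ((s, y) :: letter_iso l P Q) (letter_fix l) (letter_dir l) ->
  admissible (ext_s l P s y) (ext_t l Q s y).
Proof.
case=> SP SQ sp sq; case: l => [[] []];
  rewrite /letter_iso /letter_fix /letter_dir /ext_s /ext_t /letter_pair /= => S.
- split=> // z /sq h; by rewrite inE h orbT.
- split=> //; last by move=> z /sq h; rewrite inE h orbT.
  have := layout_pinv S; rewrite /= pinvK; apply: layout_dir_ext => k; exact: negbK.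
- split=> // z /sp h; by rewrite inE h orbT.
- split=> //; last by move=> z /sp h; rewrite inE h orbT.
  have := layout_pinv S; rewrite /= pinvK; apply: layout_dir_ext => k; exact: negbK.
Qed.

Lemma admissible_letter_range l P Q z : admissible P Q -> z \in letter_iso l P Q ->
  m < z.1 < M -> m < z.2 < M.
Proof.
move=> G hz /andP[h1 h2]; have S := admissible_layout l G.
have f1 := layout_head_fix S; have f2 := layout_last_fix S.
rewrite head_letter_fix in f1; rewrite last_letter_fix in f2.
have e1 := layout_piso S f1 hz; have e2 := layout_piso S hz f2; rewrite /= in e1 e2.
by rewrite -e1 -e2 h1 h2.
Qed.

Lemma admissible_ext_range l P Q s y :
  admissible (ext_s l P s y) (ext_t l Q s y) -> m < s < M -> m < y < M.
Proof.
move=> G; apply: (admissible_letter_range (l := l) (z := (s, y)) G).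
by rewrite letter_iso_ext mem_head.
Qed.

Lemma admissible_weval P Q P' Q' w c d : admissible P' Q' ->
  {subset P <= P'} -> {subset Q <= Q'} -> weval P Q w c = Some d -> weval P' Q' w c = Some d.
Proof. by case=> SP SQ _ _; apply: weval_extend; [exact: layout_piso SP|exact: layout_piso SQ]. Qed.

Lemma admissible_weval_ext l P Q s y w c d : admissible (ext_s l P s y) (ext_t l Q s y) ->
  weval P Q w c = Some d -> weval (ext_s l P s y) (ext_t l Q s y) w c = Some d.
Proof. by move=> G; apply: admissible_weval G _ _; [exact: ext_s_sub|exact: ext_t_sub]. Qed.

Lemma layout_notin_fix phi fs dir s : layout phi fs dir -> papp phi s = None -> s \notin fs.
Proof.
move=> S E; apply/negP => hs; have := papp_none E (layout_fix S hs); by rewrite eqxx.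
Qed.

Lemma admissible_step_new l P Q s k (eLo eUp Av : seq rat) :
  admissible P Q -> (k.+1 < size (letter_fix l))%N ->
  nth 0 (letter_fix l) k < s < nth 0 (letter_fix l) k.+1 ->
  papp (letter_iso l P Q) s = None ->
  (forall x, x \in eLo -> (forall z, z \in letter_iso l P Q -> s < z.1 -> x < z.2) /\
                          (~~ letter_dir l k -> x < s)) ->
  (forall u, u \in eUp -> (forall z, z \in letter_iso l P Q -> z.1 < s -> z.2 < u) /\
                          (letter_dir l k -> s < u)) ->
  (forall x u, x \in eLo -> u \in eUp -> x < u) ->
  exists y, [/\ admissible (ext_s l P s y) (ext_t l Q s y),
     lact (ext_s l P s y) (ext_t l Q s y) l s = Some y,
     (if letter_dir l k then s < y else y < s),
     (forall x, x \in eLo -> x < y) /\ (forall u, u \in eUp -> y < u) & y \notin Av].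
Proof.
move=> G hk hs E HL HU HLU.
have S := admissible_layout l G.
have [y [y1 y2 y3 [y4 y5] y6]] := layout_cons_exists Av S hk hs HL HU HLU.
exists y; split=> //.
- apply: admissible_ext => //; apply: layout_cons S hk hs _ y1 y2 y3.
  by move=> z hz; apply: papp_none E z hz.
- by rewrite lactE letter_iso_ext papp_head.
Qed.

Lemma admissible_step l P Q s : admissible P Q -> m < s < M ->
  exists P' Q' y, [/\ admissible P' Q', {subset P <= P'} /\ {subset Q <= Q'},
                      lact P' Q' l s = Some y & m < y < M].
Proof.
move=> G hs; have S := admissible_layout l G.
case E: (papp (letter_iso l P Q) s) => [y|].
  exists P, Q, y; split; [done|by split|by rewrite lactE|].
  exact: admissible_letter_range G (papp_mem E) hs.
have nf := layout_notin_fix S E.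
case/andP: hs => hs1 hs2.
have a1 : head 0 (letter_fix l) < s by rewrite head_letter_fix.
have a2 : s < last 0 (letter_fix l) by rewrite last_letter_fix.
have [k [hk hin]] := sorted_gap (layout_sorted S) a1 a2 nf.
have [y [G' ly _ _ _]] := admissible_step_new (eLo:=[::]) (eUp:=[::]) [::] G hk hin E
   (fun x (h : x \in [::]) => False_ind _ (notF h))
   (fun x (h : x \in [::]) => False_ind _ (notF h))
   (fun x u (h : x \in [::]) _ => False_ind _ (notF h)).
exists (ext_s l P s y), (ext_t l Q s y), y; split=> //.
  by split; [apply: ext_s_sub|apply: ext_t_sub].
by apply: admissible_ext_range G' _; rewrite hs1 hs2.
Qed.

Lemma admissible_path P Q c w : admissible P Q -> m < c < M ->
  exists P' Q' d, [/\ admissible P' Q', {subset P <= P'} /\ {subset Q <= Q'},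
                      weval P' Q' w c = Some d & m < d < M].
Proof.
move=> G hc; elim: w => [|l w [P1 [Q1 [x [G1 [s1 s2] e1 hx]]]]].
  by exists P, Q, c; split=> //; split.
have [P2 [Q2 [y [G2 [t1 t2] e2 hy]]]] := admissible_step l G1 hx.
exists P2, Q2, y; split=> //.
  by split; apply: sub_trans; eassumption.
by rewrite weval_cons (admissible_weval G2 t1 t2 e1).
Qed.

End Admissible.

Lemma count_lt_witness (T : eqType) (a b : pred T) (s : seq T) :
  (forall z, a z -> b z) -> (exists2 z, z \in s & b z && ~~ a z) -> (count a s < count b s)%N.
Proof.
move=> ab [z zs zab]; elim: s zs => // w s IH; rewrite inE => /orP[/eqP<-|zs] /=.
  case/andP: zab => -> /negbTE ->; rewrite add0n add1n ltnS; exact: sub_count.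
rewrite -addnS; apply: leq_add; last exact: IH.
by case E: (a w) => //; rewrite (ab _ E).
Qed.

Lemma potential_lt a b (c d : bool) : (a < b)%N -> (a.*2 + c < b.*2 + d)%N.
Proof.
move=> h; apply: (@leq_trans (a.+1).*2).
  by rewrite doubleS -addn2 ltn_add2l; case: c.
by apply: leq_trans (leq_addr _ _); rewrite leq_double.
Qed.

Lemma potential_le a b : (a <= b)%N -> (a.*2 + false < b.*2 + true)%N.
Proof. by move=> h; rewrite addn0 addn1 ltnS leq_double. Qed.

Section Climb.
Variables (p q : piso) (fsP fsQ : seq rat) (dirP dirQ : nat -> bool) (m M : rat).
Hypothesis hP : head 0 fsP = m.
Hypothesis lP : last 0 fsP = M.
Hypothesis hQ : head 0 fsQ = m.
Hypothesis lQ : last 0 fsQ = M.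
Hypothesis Hfix : forall c, c \in fsP -> c \in fsQ -> c = m \/ c = M.

Local Notation G := (admissible p q fsP fsQ dirP dirQ).

Definition fix_of (g : bool) := if g then fsQ else fsP.
Definition dir_of (g : bool) k := if g then dirQ k else dirP k.
Definition up_letter (g : bool) k : letter := (g, dir_of g k).

Lemma letter_fix_up g k : letter_fix fsP fsQ (up_letter g k) = fix_of g. Proof. by []. Qed.
Lemma letter_dir_up g k : letter_dir dirP dirQ (up_letter g k) k = true.
Proof. by rewrite /letter_dir /up_letter /dir_of /=; case: g; case: (_ k). Qed.

Lemma fix_of_sorted g P Q : G P Q -> sorted <%R (fix_of g).
Proof. by case=> SP SQ _ _; case: g; [exact: layout_sorted SQ|exact: layout_sorted SP]. Qed.

Lemma exists_gap g x : sorted <%R (fix_of g) -> m < x < M -> x \notin fix_of g ->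
  exists k, in_gap (fix_of g) x k.
Proof.
move=> st /andP[h1 h2] nx.
have a1 : head 0 (fix_of g) < x by rewrite /fix_of; case: (g); rewrite ?hP ?hQ.
have a2 : x < last 0 (fix_of g) by rewrite /fix_of; case: (g); rewrite ?lP ?lQ.
have [k [hk hin]] := sorted_gap st a1 a2 nx.
by exists k; rewrite /in_gap hk hin.
Qed.

Lemma not_common_fix x : m < x < M -> x \in fsP -> x \in fsQ -> False.
Proof.
move=> /andP[h1 h2] a b; case: (Hfix a b) => e; rewrite e ltxx in h1 h2 => //.
Qed.

(* The last letter of acc is the up-letter of the gap of x for its generator, so
   no up-letter cancels it. *)
Definition last_letter_up (acc : word) (x : rat) : Prop :=
  forall l0 rest, acc = l0 :: rest -> forall k, in_gap (fix_of l0.1) x k -> l0.2 = dir_of l0.1 k.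

Variables (O : seq rat) (c0 : rat).
Hypothesis fix_old : forall g c, c \in fix_of g -> c \in O.

(* O is the set of old coordinates; pairs added while climbing lie below x. *)
Definition climbing (P Q : piso) (x : rat) (acc : word) : Prop :=
  [/\ G P Q, m < x < M,
      (forall z, z \in P ++ Q -> (z.1 \in O /\ z.2 \in O) \/ (z.1 <= x /\ z.2 <= x)),
      weval P Q acc c0 = Some x & reduced acc].
Definition climb_state P Q x acc := climbing P Q x acc /\ last_letter_up acc x.

Definition above_count (x : rat) : nat := count (fun o => (x < o) && (o < M)) O.
Definition potential (x : rat) : nat := ((above_count x).*2 + (x \in O))%N.

Lemma above_count_mono x y : x <= y -> (above_count y <= above_count x)%N.
Proof.
move=> xy; apply: sub_count => o /andP[yo ->]; by rewrite (le_lt_trans xy yo).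
Qed.

Lemma above_count_lt x y o : x < o -> o <= y -> o \in O -> o < M ->
  (above_count y < above_count x)%N.
Proof.
move=> xo oy oO oM; apply: count_lt_witness.
  by move=> z /andP[yz ->]; rewrite (lt_trans xo (le_lt_trans oy yz)).
by exists o => //; rewrite xo oM !andbT -leNgt oy.
Qed.

Lemma above_count0 x o : above_count x = 0%N -> o \in O -> x < o -> o < M -> False.
Proof.
move=> e oO xo oM; have : (0 < above_count x)%N.
  by rewrite /above_count -has_count; apply/hasP; exists o => //; rewrite xo oM.
by rewrite e.
Qed.

Lemma above_count_min x : (0 < above_count x)%N ->
  exists o, [/\ o \in O, x < o, o < M & forall o', o' \in O -> x < o' -> o' < M -> o <= o'].
Proof.
rewrite /above_count -has_count => /hasP[o oO /andP[xo oM]].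
set L := [seq o' <- O | (x < o') && (o' < M)].
have ne : L != [::].
  apply/eqP => e; have : o \in L by rewrite mem_filter xo oM oO.
  by rewrite e.
have [a ain amin] := exists_seq_min ne.
move: ain; rewrite mem_filter => /andP[/andP[xa aM] aO].
exists a; split=> // o' o'O xo' o'M; apply: amin; by rewrite mem_filter xo' o'M o'O.
Qed.

Lemma below_or_old_letter P Q x l z :
  (forall z, z \in P ++ Q -> (z.1 \in O /\ z.2 \in O) \/ (z.1 <= x /\ z.2 <= x)) ->
  z \in letter_iso l P Q -> (z.1 \in O /\ z.2 \in O) \/ (z.1 <= x /\ z.2 <= x).
Proof.
move=> BI /mem_letter_iso [h|h]; first exact: BI.
by case: (BI _ h) => [[a b]|[a b]]; [left|right].
Qed.

Lemma last_letter_up_up P Q g k y acc : G P Q -> in_gap (fix_of g) y k ->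
  last_letter_up (up_letter g k :: acc) y.
Proof. by move=> Gd hy l0 rest [<- _] j hj /=; rewrite (gap_uniq (fix_of_sorted g Gd) hy hj). Qed.

Lemma climb_move_old P Q x acc g k y :
  climbing P Q x acc -> reduced (up_letter g k :: acc) -> in_gap (fix_of g) x k ->
  papp (letter_iso (up_letter g k) P Q) x = Some y ->
  [/\ climb_state P Q y (up_letter g k :: acc), x < y < nth 0 (fix_of g) k.+1 & y \in O].
Proof.
move=> [Gd hx BI ev red] red' hiv E; have /andP[hk hin] := hiv.
have S := admissible_layout (up_letter g k) Gd; rewrite letter_fix_up in S.
have hz := papp_mem E.
have xy : x < y by have := layout_dir S hk hz hin; rewrite letter_dir_up.
have hin2 := layout_gap_image S hk hz hin.
have yO : y \in O.
  by case: (below_or_old_letter BI hz) => [[_ //]|[_ /= yx]]; rewrite leNgt xy in yx.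
split=> //; last by rewrite xy; case/andP: hin2.
split; last by apply: (last_letter_up_up Gd); rewrite /in_gap hk hin2.
split=> //.
- exact: admissible_letter_range Gd hz hx.
- by move=> z /BI [[a b]|[a b]]; [left|right; split; exact: le_trans (ltW xy)].
- by rewrite weval_cons ev; exact: (etrans (lactE _ _ _ _) E).
Qed.

Lemma climb_move_new P Q x acc g k T :
  climbing P Q x acc -> reduced (up_letter g k :: acc) -> in_gap (fix_of g) x k ->
  x <= T -> T < nth 0 (fix_of g) k.+1 ->
  (forall z, z \in letter_iso (up_letter g k) P Q -> x < z.1 -> z.1 <= T -> T < z.2) ->
  papp (letter_iso (up_letter g k) P Q) x = None ->
  exists y, [/\ climb_state (ext_s (up_letter g k) P x y) (ext_t (up_letter g k) Q x y) y
                             (up_letter g k :: acc),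
                x < y < nth 0 (fix_of g) k.+1, T < y & y \notin O].
Proof.
move=> [Gd hx BI ev red] red' hiv xT Tb HT E; have /andP[hk hin] := hiv.
have S := admissible_layout (up_letter g k) Gd; rewrite letter_fix_up in S.
have Hlo t : t \in [:: T] -> (forall z, z \in letter_iso (up_letter g k) P Q -> x < z.1 -> t < z.2)
                           /\ (~~ letter_dir dirP dirQ (up_letter g k) k -> t < x).
  rewrite inE => /eqP->; split; last by rewrite letter_dir_up.
  by case/andP: hin => h1 _; exact: (layout_up S hk h1 xT Tb (letter_dir_up g k) HT).
have [y [G' ly hdir [hL _] yO]] :=
  admissible_step_new (l:=up_letter g k) (eUp:=[::]) O Gd hk hin E Hlo
   (fun u (h : u \in [::]) => False_ind _ (notF h))
   (fun t u _ (h : u \in [::]) => False_ind _ (notF h)).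
rewrite letter_dir_up in hdir.
have S' := admissible_layout (up_letter g k) G'; rewrite letter_iso_ext letter_fix_up in S'.
have hin2 := layout_gap_image S' hk (mem_head _ _) hin.
exists y; split=> //; first split.
- split=> //.
  + exact: admissible_ext_range G' hx.
  + move=> z /mem_ext [/BI [[a b]|[a b]]|->]; [left|right|right] => //.
      split; exact: le_trans (ltW hdir).
    by rewrite /letter_pair; case: (up_letter g k).2; rewrite /= lexx (ltW hdir).
  + by rewrite weval_cons (admissible_weval_ext G' ev).
- by apply: (last_letter_up_up G'); rewrite /in_gap hk hin2.
- by rewrite hdir; case/andP: hin2.
- by apply: hL; rewrite inE.
Qed.

Lemma climb_move P Q x acc g k T :
  climbing P Q x acc -> reduced (up_letter g k :: acc) -> in_gap (fix_of g) x k ->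
  x <= T -> T < nth 0 (fix_of g) k.+1 ->
  (forall z, z \in letter_iso (up_letter g k) P Q -> x < z.1 -> z.1 <= T -> T < z.2) ->
  exists P' Q' y, [/\ climb_state P' Q' y (up_letter g k :: acc),
                      {subset P <= P'} /\ {subset Q <= Q'},
                      x < y < nth 0 (fix_of g) k.+1 & (y \in O) \/ (T < y /\ y \notin O)].
Proof.
move=> B red' hiv xT Tb HT.
case E: (papp (letter_iso (up_letter g k) P Q) x) => [y|].
  have [B' xy yO] := climb_move_old B red' hiv E.
  by exists P, Q, y; split=> //; [split|left].
have [y [B' xy Ty yO]] := climb_move_new B red' hiv xT Tb HT E.
exists (ext_s (up_letter g k) P x y), (ext_t (up_letter g k) Q x y), y; split=> //.
- by split; [exact: ext_s_sub|exact: ext_t_sub].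
- by right.
Qed.

Lemma reduced_up_letter P Q x acc g k : climb_state P Q x acc -> in_gap (fix_of g) x k ->
  reduced (up_letter g k :: acc).
Proof.
move=> [[_ _ _ _ red] pok] hiv; case: acc red pok => // l0 rest red pok.
apply: reduced_cons => //; apply/negP => /eqP e.
have e1 : l0.1 = g by rewrite e.
have := pok l0 rest erefl k; rewrite e1 => /(_ hiv) e2.
have eb : l0.2 = ~~ dir_of g k by rewrite e.
by rewrite e2 in eb; case: (dir_of g k) eb.
Qed.

Lemma exists_nonfix_generator x : m < x < M -> exists g, x \notin fix_of g.
Proof.
move=> hx; case E: (x \in fsP); last by exists false; rewrite /fix_of E.
case F: (x \in fsQ); last by exists true; rewrite /fix_of F.
by case: (not_common_fix hx E F).
Qed.

Lemma climb_move_up P Q x acc g k :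
  climbing P Q x acc -> reduced (up_letter g k :: acc) -> in_gap (fix_of g) x k ->
  exists P' Q' y, [/\ climb_state P' Q' y (up_letter g k :: acc),
                      {subset P <= P'} /\ {subset Q <= Q'} & x < y < nth 0 (fix_of g) k.+1].
Proof.
move=> B red hk; have /andP[_ /andP[_ xb]] := hk.
have vacuous z : z \in letter_iso (up_letter g k) P Q -> x < z.1 -> z.1 <= x -> x < z.2.
  by move=> _ xz zx; have := lt_le_trans xz zx; rewrite ltxx.
have [P' [Q' [y [B' sub /andP[xy yb] _]]]] := climb_move B red hk (lexx x) xb vacuous.
by exists P', Q', y; rewrite xy yb.
Qed.

Lemma climb_state_ltM P Q x acc : climb_state P Q x acc -> x < M.
Proof. by case=> -[_ /andP[]]. Qed.

Lemma climb_past P Q x acc g k o :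
  climb_state P Q x acc -> in_gap (fix_of g) x k ->
  o \in O -> x < o -> o < M -> (forall o', o' \in O -> x < o' -> o' < M -> o <= o') ->
  o < nth 0 (fix_of g) k.+1 ->
  exists l P' Q' y, [/\ climb_state P' Q' y (l :: acc), {subset P <= P'} /\ {subset Q <= Q'}
                     & (potential y < potential x)%N].
Proof.
move=> B hk oO xo oM omin ob; have [[Gd _ BI _ _] _] := B.
have HT z : z \in letter_iso (up_letter g k) P Q -> x < z.1 -> z.1 <= o -> o < z.2.
  move=> hz xz zo.
  have S := admissible_layout (up_letter g k) Gd; rewrite letter_fix_up in S.
  case: (below_or_old_letter BI hz) => [[z1O _]|[zx _]]; last by rewrite leNgt xz in zx.
  have ez : z.1 = o by apply/eqP; rewrite eq_le zo omin // (le_lt_trans zo oM).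
  case/andP: hk => hk /andP[h1 _].
  have := layout_dir S hk hz; rewrite letter_dir_up ez (lt_trans h1 xo) ob -ez; exact.
have [P' [Q' [y [B' sub /andP[xy _] hy]]]] :=
  climb_move (proj1 B) (reduced_up_letter B hk) hk (ltW xo) ob HT.
exists (up_letter g k), P', Q', y; split=> //; apply: potential_lt.
case: hy => [yO|[oy _]]; last exact: above_count_lt xo (ltW oy) oO oM.
exact: above_count_lt xo (omin _ yO xy (climb_state_ltM B')) oO oM.
Qed.

Lemma climb_below_wall P Q x acc g k :
  climb_state P Q x acc -> in_gap (fix_of g) x k -> x \in O ->
  (forall o, o \in O -> x < o -> o < M -> nth 0 (fix_of g) k.+1 <= o) ->
  exists l P' Q' y, [/\ climb_state P' Q' y (l :: acc), {subset P <= P'} /\ {subset Q <= Q'}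
                     & (potential y < potential x)%N].
Proof.
move=> B hk xO wall.
have [P' [Q' [y [B' sub /andP[xy yb]]]]] := climb_move_up (proj1 B) (reduced_up_letter B hk) hk.
exists (up_letter g k), P', Q', y; split=> //.
have yO : y \notin O.
  by apply/negP => yO; have := wall _ yO xy (climb_state_ltM B'); rewrite leNgt yb.
by rewrite /potential xO (negbTE yO); apply/potential_le/above_count_mono/ltW.
Qed.

(* The potential counts twice the old coordinates strictly between the current
   point and M, plus one if the current point is itself old: a move either passes
   an old coordinate or leaves the old coordinates. *)
Lemma climb_step P Q x acc : climb_state P Q x acc -> (0 < above_count x)%N || (x \in O) ->
  exists l P' Q' y, [/\ climb_state P' Q' y (l :: acc), {subset P <= P'} /\ {subset Q <= Q'}
                     & (potential y < potential x)%N].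
Proof.
move=> B hc; have [[Gd hx _ _ _] _] := B.
have [g gx] := exists_nonfix_generator hx.
have [k hk] := exists_gap (fix_of_sorted g Gd) hx gx.
case: (posnP (above_count x)) => [N0|Npos].
  apply: (climb_below_wall B hk); first by move: hc; rewrite N0.
  by move=> o oO xo oM; case: (above_count0 N0 oO xo oM).
have [o [oO xo oM omin]] := above_count_min Npos.
have wall_at h j : in_gap (fix_of h) x j -> nth 0 (fix_of h) j.+1 <= o ->
    nth 0 (fix_of h) j.+1 = o.
  move=> /andP[hj /andP[_ xb]] bo; apply/eqP; rewrite eq_le bo omin //.
  - exact: fix_old (mem_nth 0 hj).
  - exact: le_lt_trans bo oM.
have [ob|bo] := ltP o (nth 0 (fix_of g) k.+1); first exact: climb_past B hk oO xo oM omin ob.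
have end_g := wall_at _ _ hk bo.
have [xh|xh] := boolP (x \in fix_of (~~ g)).
  apply: (climb_below_wall B hk (fix_old xh)) => o' o'O xo' o'M.
  by rewrite end_g; apply: omin.
have [k2 hk2] := exists_gap (fix_of_sorted (~~ g) Gd) hx xh.
have [ob|bo2] := ltP o (nth 0 (fix_of (~~ g)) k2.+1).
  exact: climb_past B hk2 oO xo oM omin ob.
have end_ng := wall_at _ _ hk2 bo2.
have o1 : o \in fix_of g by rewrite -end_g; case/andP: hk => hk _; exact: mem_nth.
have o2 : o \in fix_of (~~ g) by rewrite -end_ng; case/andP: hk2 => hk2 _; exact: mem_nth.
have ho : m < o < M by case/andP: hx => hx1 _; rewrite (lt_trans hx1 xo) oM.
by case: g {gx k hk bo end_g xh k2 hk2 bo2 end_ng} o1 o2 => o1 o2;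
  [case: (not_common_fix ho o2 o1)|case: (not_common_fix ho o1 o2)].
Qed.

Lemma climb_iter n P Q x acc : (potential x < n)%N -> climb_state P Q x acc ->
  exists v P' Q' y, [/\ climb_state P' Q' y (v ++ acc), {subset P <= P'} /\ {subset Q <= Q'},
                       above_count y = 0%N & y \notin O].
Proof.
elim: n P Q x acc => // n IH P Q x acc hn B.
case: (boolP ((0 < above_count x)%N || (x \in O))) => hc.
  have [l [P1 [Q1 [y [B1 [s1 s2] hmu]]]]] := climb_step B hc.
  have [v [P2 [Q2 [z [B2 [t1 t2] e zO]]]]] := IH _ _ _ _ (leq_trans hmu hn) B1.
  exists (v ++ [:: l]), P2, Q2, z; rewrite -catA /=; split=> //.
  by split; apply: sub_trans; eassumption.
move: hc; rewrite negb_or -eqn0Ngt => /andP[/eqP N0 xO].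
by exists [::], P, Q, x; split=> //; split.
Qed.

(* If the last letter of acc is not the up-letter of the gap of x, one letter of
   the other generator, fixing x or moving it up, is read first. *)
Lemma climb_start P Q x acc : G P Q -> m < x < M ->
  (forall z, z \in P ++ Q -> z.1 \in O /\ z.2 \in O) ->
  weval P Q acc c0 = Some x -> reduced acc ->
  exists v P' Q' y, climb_state P' Q' y (v ++ acc) /\ ({subset P <= P'} /\ {subset Q <= Q'}).
Proof.
move=> Gd hx AO ev red.
have B0 : climbing P Q x acc by split=> // z /AO h; left.
case: acc ev red B0 => [|l0 rest] ev red B0.
  by exists [::], P, Q, x; split; [split=> // l0 rest|split].
case: (boolP (x \in fix_of l0.1)) => x0.
  exists [::], P, Q, x; split; last by split.
  split=> // l1 r1 [<- _] k hk.
  by rewrite (negbTE (gap_notin (fix_of_sorted l0.1 Gd) hk)) in x0.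
have [k0 hk0] := exists_gap (fix_of_sorted _ Gd) hx x0.
case: (eqVneq l0.2 (dir_of l0.1 k0)) => e0.
  exists [::], P, Q, x; split; last by split.
  by split=> // l1 r1 [<- _] k hk; rewrite (gap_uniq (fix_of_sorted _ Gd) hk hk0).
set h := ~~ l0.1.
have hne : forall b, l0.1 != (h, b).1 by move=> b; rewrite /h /=; case: (l0.1).
case: (boolP (x \in fix_of h)) => xh.
  exists [:: (h, true)], P, Q, x; split; last by split.
  split; last first.
    by move=> l1 r1 [<- _] k hk; rewrite (negbTE (gap_notin (fix_of_sorted h Gd) hk)) in xh.
  case: B0 => _ _ BI _ _; split=> //.
    rewrite weval_cons ev; apply: (etrans (lactE _ _ _ _)).
    apply: mem_papp; first exact: admissible_letter_piso Gd.
    have S := admissible_layout (h, true) Gd; exact (layout_fix S xh).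
  by apply: reduced_cons => //; apply: neq_linv_gen; exact: hne.
have [kh hkh] := exists_gap (fix_of_sorted h Gd) hx xh.
have red' : reduced (up_letter h kh :: l0 :: rest).
  by apply: reduced_cons => //; apply: neq_linv_gen; exact: hne.
have [P' [Q' [y [B2 sub _]]]] := climb_move_up B0 red' hkh.
by exists [:: up_letter h kh], P', Q', y.
Qed.

Lemma climb_above P Q x acc : G P Q -> m < x < M ->
  (forall z, z \in P ++ Q -> z.1 \in O /\ z.2 \in O) ->
  weval P Q acc c0 = Some x -> reduced acc ->
  exists v P' Q' y, [/\ climb_state P' Q' y (v ++ acc), {subset P <= P'} /\ {subset Q <= Q'},
                       above_count y = 0%N & y \notin O].
Proof.
move=> Gd hx AO ev red.
have [v1 [P1 [Q1 [x1 [B1 [s1 s2]]]]]] := climb_start Gd hx AO ev red.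
have [v2 [P2 [Q2 [y [B2 [t1 t2] e yO]]]]] := climb_iter (ltnSn _) B1.
exists (v2 ++ v1), P2, Q2, y; rewrite -catA; split=> //.
by split; apply: sub_trans; eassumption.
Qed.

End Climb.

Section Rungs.
Variables (r0 dd : rat).
Hypothesis hd : 0 < dd.

Definition rung (i : nat) : rat := r0 + i%:R * dd.

Lemma rung_lt i j : (rung i < rung j) = (i < j)%N.
Proof. by rewrite /rung ltrD2l ltr_pM2r // ltr_nat. Qed.
Lemma rung_le i j : (rung i <= rung j) = (i <= j)%N.
Proof. by rewrite /rung lerD2l ler_pM2r // ler_nat. Qed.
Lemma rung_S i : rung i < rung i.+1. Proof. by rewrite rung_lt. Qed.
Lemma rung0 : rung 0 = r0. Proof. by rewrite /rung mul0r addr0. Qed.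

Definition one_rung (z : rat * rat) : Prop :=
  [/\ (forall i, z.1 < rung i -> z.2 < rung i.+1), (forall i, z.2 < rung i -> z.1 < rung i.+1),
      (forall i, rung i.+1 < z.1 -> rung i < z.2) & (forall i, rung i.+1 < z.2 -> rung i < z.1)].

Lemma one_rung_swap z : one_rung z -> one_rung (z.2, z.1).
Proof. by case=> a b c d; split. Qed.

Lemma one_rung_low z : z.1 <= rung 0 -> z.2 <= rung 0 -> one_rung z.
Proof.
move=> h1 h2; have H : forall i, rung 0 < rung i.+1 by move=> i; rewrite rung_lt.
split=> i h.
- exact: le_lt_trans h2 (H i).
- exact: le_lt_trans h1 (H i).
- by move: (lt_le_trans h (le_trans h1 (ltW (H i)))); rewrite ltxx.
- by move: (lt_le_trans h (le_trans h2 (ltW (H i)))); rewrite ltxx.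
Qed.

Lemma one_rung_fix a : one_rung (a, a).
Proof.
split=> i /= h; first by apply: lt_trans h (rung_S i).
- by apply: lt_trans h (rung_S i).
- by apply: lt_trans (rung_S i) h.
- by apply: lt_trans (rung_S i) h.
Qed.

Lemma one_rung_step j : one_rung (rung j, rung j.+1).
Proof.
split=> i /=; rewrite !rung_lt.
- by [].
- by move=> h; rewrite ltnS (leq_trans (leqnSn _) (ltnW h)).
- by move=> h; rewrite ltnS (leq_trans (leqnSn _) (ltnW h)).
- by [].
Qed.

End Rungs.

Fixpoint s_early (K : nat) (w : word) : bool :=
  if w is l :: w' then (l.1 || (size w' < K)%N) && s_early K w' else true.

Lemma s_early_size K (acc : word) : (size acc <= K)%N -> s_early K acc.
Proof.
elim: acc => //= l acc IH h; rewrite IH ?(ltnW h) // (leq_trans _ h) ?orbT //.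
Qed.

Lemma s_early_nseq K n (bl : letter) acc : bl.1 -> s_early K acc -> s_early K (nseq n bl ++ acc).
Proof. by move=> h1 h2; elim: n => //= n ->; rewrite h1. Qed.

Lemma rung_top (x M : rat) (r : nat) : rung x ((M - x) / (r.+1)%:R) r.+1 = M.
Proof. by rewrite /rung mulrC divfK ?pnatr_eq0 // addrC subrK. Qed.

Lemma rung_step_gt0 (x M : rat) (r : nat) : x < M -> 0 < (M - x) / (r.+1)%:R.
Proof. by move=> h; rewrite divr_gt0 // ?subr_gt0 // ltr0Sn. Qed.

Section RungPaths.
Variables (p q : piso) (fsP fsQ : seq rat) (dirP dirQ : nat -> bool) (m M : rat).
Hypothesis hP : head 0 fsP = m.
Hypothesis lP : last 0 fsP = M.
Hypothesis hQ : head 0 fsQ = m.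
Hypothesis lQ : last 0 fsQ = M.
Variables (r0 dd : rat) (Nb K : nat).
Hypothesis hd : 0 < dd.
Hypothesis hNb : M <= rung r0 dd Nb.

Local Notation rung := (rung r0 dd).
Local Notation one_rung := (one_rung r0 dd).
Local Notation G := (admissible p q fsP fsQ dirP dirQ).

Lemma rungS i : rung i < rung i.+1. Proof. exact (rung_S r0 hd i). Qed.
Lemma rungle i j : (rung i <= rung j) = (i <= j)%N. Proof. exact (rung_le r0 hd i j). Qed.

Definition one_rung_all P Q := forall z, z \in P ++ Q -> one_rung z.
Definition s_low (P : piso) := forall z, z \in P -> z = (M, M) \/ (z.1 < rung K /\ z.2 < rung K).

Lemma one_rung_letter P Q l z : one_rung_all P Q -> z \in letter_iso l P Q -> one_rung z.
Proof.
move=> H /mem_letter_iso [h|h]; first exact: H.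
by have := one_rung_swap (H _ h).
Qed.

Lemma rung_ge_top i : (Nb <= i)%N -> M <= rung i.
Proof. by move=> h; apply: le_trans hNb _; rewrite rungle. Qed.

Lemma rung_lt_top i x : rung i <= x -> x < M -> (i < Nb)%N.
Proof.
move=> h1 h2; rewrite ltnNge; apply/negP => /rung_ge_top h3.
by have := lt_le_trans (le_lt_trans h1 h2) h3; rewrite ltxx.
Qed.

Lemma one_rung_between s y : s < M -> y < M ->
  (forall i, (i < Nb)%N -> rung i.+1 <= s -> rung i < y) ->
  (forall i, (i < Nb)%N -> s <= rung i -> y < rung i.+1) -> one_rung (s, y).
Proof.
move=> sM yM inLo inUp; split=> i /= h.
- case: (ltnP i Nb) => hi; first exact: inUp hi (ltW h).
  exact: lt_le_trans yM (le_trans (rung_ge_top hi) (ltW (rungS i))).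
- rewrite ltNge; apply/negP => h2.
  have hi : (i < Nb)%N by apply: ltn_trans (ltnSn i) (rung_lt_top h2 sM).
  by have := inLo i hi h2; rewrite ltNge (ltW h).
- have hi : (i < Nb)%N by apply: ltn_trans (ltnSn i) (rung_lt_top (ltW h) sM).
  exact: inLo hi (ltW h).
- rewrite ltNge; apply/negP => h2.
  case: (ltnP i Nb) => hi; first by have := inUp i hi h2; rewrite ltNge (ltW h).
  by have := lt_trans h yM; rewrite ltNge (le_trans (rung_ge_top hi) (ltW (rungS i))).
Qed.

Lemma rung_step P Q l s : G P Q -> one_rung_all P Q -> m < s < M ->
  papp (letter_iso l P Q) s = None ->
  exists y, [/\ G (ext_s l P s y) (ext_t l Q s y), one_rung_all (ext_s l P s y) (ext_t l Q s y),
                lact (ext_s l P s y) (ext_t l Q s y) l s = Some y & m < y < M].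
Proof.
move=> Gd RA hs E.
have S := admissible_layout l Gd.
have nf := layout_notin_fix S E.
have hs' := hs; case/andP: hs' => hs1 hs2.
have a1 : head 0 (letter_fix fsP fsQ l) < s by rewrite (head_letter_fix hP hQ).
have a2 : s < last 0 (letter_fix fsP fsQ l) by rewrite (last_letter_fix lP lQ).
have [k [hk hin]] := sorted_gap (layout_sorted S) a1 a2 nf.
set LoR := [seq rung i | i <- iota 0 Nb & rung i.+1 <= s].
set UpR := [seq rung i.+1 | i <- iota 0 Nb & s <= rung i].
have HL : forall x, x \in LoR -> (forall z, z \in letter_iso l P Q -> s < z.1 -> x < z.2) /\
                                 (~~ letter_dir dirP dirQ l k -> x < s).
  move=> x /mapP[i]; rewrite mem_filter => /andP[hi _] ->; split.
    move=> z hz sz; case: (one_rung_letter RA hz) => _ _ h _; apply: h.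
    exact: le_lt_trans hi sz.
  by move=> _; exact: lt_le_trans (rungS i) hi.
have HU : forall u, u \in UpR -> (forall z, z \in letter_iso l P Q -> z.1 < s -> z.2 < u) /\
                                 (letter_dir dirP dirQ l k -> s < u).
  move=> u /mapP[i]; rewrite mem_filter => /andP[hi _] ->; split.
    move=> z hz zs; case: (one_rung_letter RA hz) => h _ _ _; apply: h.
    exact: lt_le_trans zs hi.
  by move=> _; exact: le_lt_trans hi (rungS i).
have HLU : forall x u, x \in LoR -> u \in UpR -> x < u.
  move=> x u /mapP[i]; rewrite mem_filter => /andP[hi _] ->.
  move=> /mapP[j]; rewrite mem_filter => /andP[hj _] ->.
  apply: lt_trans (rungS i) _; apply: le_lt_trans hi _; exact: le_lt_trans hj (rungS j).
have [y [G' ly _ [yL yU] _]] := admissible_step_new [::] Gd hk hin E HL HU HLU.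
have hy := admissible_ext_range hP lP hQ lQ G' hs.
have yM : y < M by case/andP: hy.
have inLo : forall i, (i < Nb)%N -> rung i.+1 <= s -> rung i < y.
  by move=> i hi h; apply: yL; apply/mapP; exists i => //; rewrite mem_filter h mem_iota.
have inUp : forall i, (i < Nb)%N -> s <= rung i -> y < rung i.+1.
  by move=> i hi h; apply: yU; apply/mapP; exists i => //; rewrite mem_filter h mem_iota.
have RIsy := one_rung_between hs2 yM inLo inUp.
exists y; split=> //.
move=> z /mem_ext [/RA //|->]; rewrite /letter_pair; case: (l.2) => //.
exact: (one_rung_swap RIsy).
Qed.

Lemma rung_path P Q w c : G P Q -> one_rung_all P Q -> s_low P -> s_early K w ->
  m < c < M -> c < rung 0 ->
  exists P' Q' d, [/\ G P' Q', {subset P <= P'} /\ {subset Q <= Q'}, one_rung_all P' Q' /\ s_low P',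
                      weval P' Q' w c = Some d & (m < d < M) /\ d < rung (size w)].
Proof.
move=> Gd RA PBP + hc hc0; elim: w => [_|l w IH /andP[hl hw]].
  by exists P, Q, c; split=> //; split.
have [P1 [Q1 [x [G1 [s1 s2] [RA1 PB1] e1 [hx hxr]]]]] := IH hw.
case E: (papp (letter_iso l P1 Q1) x) => [y|].
  have hz := papp_mem E.
  exists P1, Q1, y; split=> //.
  - by rewrite weval_cons e1 /= lactE.
  - split; first exact (admissible_letter_range hP lP hQ lQ G1 hz hx).
    by case: (one_rung_letter RA1 hz) => h _ _ _; apply: h.
have [y [G2 RA2 ly hy]] := rung_step G1 RA1 hx E.
have RIxy : one_rung (x, y).
  by have := RA2 (letter_pair l x y); rewrite mem_cat; rewrite /ext_s /ext_t /letter_pair;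
     case: (l.1); case: (l.2); rewrite ?inE ?eqxx ?orbT => /(_ isT) // /one_rung_swap.
exists (ext_s l P1 x y), (ext_t l Q1 x y), y; split=> //.
- by split; apply: sub_trans; [exact: s1|exact: ext_s_sub|exact: s2|exact: ext_t_sub].
- split=> // z /mem_ext_s [/PB1 //|[l1 ->]]; right.
  move: hl; rewrite l1 /= => hK.
  have hyr : y < rung (size w).+1 by case: RIxy => h _ _ _; apply: h.
  have hle : rung (size w).+1 <= rung K by rewrite rungle.
  rewrite /letter_pair; case: (l.2) => /=; split;
    by [apply: lt_le_trans hyr hle|apply: lt_le_trans (lt_trans hxr (rungS _)) hle].
- rewrite weval_cons (admissible_weval_ext G2 e1).
  exact: ly.
- by split=> //; case: RIxy => h _ _ _; apply: h.
Qed.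

Lemma rung_paths P Q w (cs : seq rat) : G P Q -> one_rung_all P Q -> s_low P -> s_early K w ->
  (forall c, c \in cs -> m < c < M /\ c < rung 0) ->
  exists P' Q', [/\ G P' Q', {subset P <= P'} /\ {subset Q <= Q'}, one_rung_all P' Q' /\ s_low P' &
                   forall c, c \in cs -> exists d, weval P' Q' w c = Some d].
Proof.
move=> Gd RA PBP hw; elim: cs => [_|c cs IH Hc].
  by exists P, Q; split=> //; split.
have [P1 [Q1 [G1 [s1 s2] [RA1 PB1] H1]]] := IH (fun c' h => Hc c' (@mem_behead _ (c :: cs) c' h)).
have [hc hc0] := Hc c (mem_head _ _).
have [P2 [Q2 [d [G2 [t1 t2] [RA2 PB2] e2 _]]]] := rung_path G1 RA1 PB1 hw hc hc0.
exists P2, Q2; split=> //.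
  by split; apply: sub_trans; eassumption.
move=> c'; rewrite inE => /orP[/eqP->|h]; first by exists d.
have [d' e'] := H1 c' h; exists d'.
exact: admissible_weval G2 t1 t2 e'.
Qed.

Lemma s_low_ess P z : s_low P -> dmax P = M -> ess P z -> z < rung K.
Proof.
move=> low dM; rewrite /ess dM => /and3P[hz _ zM].
have [w0 hw0 ez] : exists2 w0, w0 \in P & z = w0.1 \/ z = w0.2.
  by case/orP: hz => /mapP[w0 hw0 ->]; exists w0 => //; [left|right].
by case: (low w0 hw0) => [e|[a b]]; case: ez zM => ->; rewrite ?e ?eqxx.
Qed.

End RungPaths.

Section Main.
Variables (p q : piso) (fsP fsQ : seq rat) (dirP dirQ : nat -> bool) (m M : rat).
Hypothesis SP : layout p fsP dirP.
Hypothesis SQ : layout q fsQ dirQ.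
Hypothesis hP : head 0 fsP = m.
Hypothesis lP : last 0 fsP = M.
Hypothesis hQ : head 0 fsQ = m.
Hypothesis lQ : last 0 fsQ = M.
Hypothesis Hfix : forall c, c \in fsP -> c \in fsQ -> c = m \/ c = M.

Local Notation G := (admissible p q fsP fsQ dirP dirQ).

Lemma admissible_base : G p q. Proof. by split. Qed.

Section Ladder.
Variables (P Q : piso) (xK dd : rat) (acc : word) (c0 : rat) (r kq : nat).
Hypothesis GPQ : G P Q.
Hypothesis Hcl : forall z, z \in P ++ Q -> z = (M, M) \/ (z.1 <= xK /\ z.2 <= xK).
Hypothesis Hkq : in_gap fsQ xK kq.
Hypothesis Hkq1 : nth 0 fsQ kq.+1 = M.
Hypothesis hdd : 0 < dd.
Hypothesis Htop : rung xK dd r.+1 = M.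
Hypothesis Hev : weval P Q acc c0 = Some xK.
Hypothesis Hred : reduced acc.
Hypothesis Hpok : last_letter_up fsP fsQ dirP dirQ acc xK.

Local Notation rung := (rung xK dd).
Definition ladder_letter : letter := (true, dirQ kq).
Local Notation bl := ladder_letter.

Lemma letter_dir_bl : letter_dir dirP dirQ bl kq = true.
Proof. by rewrite /letter_dir /bl /=; case: (dirQ kq). Qed.

Lemma rung_ltM n : (n <= r)%N -> rung n < M.
Proof. by move=> h; rewrite -Htop (rung_lt xK hdd) ltnS. Qed.

Lemma rung0_le n : xK <= rung n.
Proof. by move: (rung_le xK hdd 0 n); rewrite (rung0 xK dd) leq0n => ->. Qed.

Lemma rung0_lt n : xK < rung n.+1.
Proof. by move: (rung_lt xK hdd 0 n.+1); rewrite (rung0 xK dd) ltn0Sn => ->. Qed.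

Definition ladder_on (Q' : piso) (n : nat) : Prop :=
  forall z, z \in Q' -> z \in Q \/ exists2 j, (j < n)%N & z = letter_pair bl (rung j) (rung j.+1).

Lemma ladder_letter_pairs Q' n : ladder_on Q' n -> forall z, z \in letter_iso bl P Q' ->
  z = (M, M) \/ (z.1 <= xK /\ z.2 <= xK) \/ exists2 j, (j < n)%N & z = (rung j, rung j.+1).
Proof.
move=> cl z; rewrite /letter_iso /bl /=.
have H w : w \in Q' -> w = (M, M) \/ (w.1 <= xK /\ w.2 <= xK) \/
    exists2 j, (j < n)%N & w = letter_pair bl (rung j) (rung j.+1).
  move=> /cl [wQ|[j hj ->]]; last by right; right; exists j.
  by have := @Hcl w; rewrite mem_cat wQ orbT => /(_ isT) [->|h]; [left|right; left].
case E: (dirQ kq) => hz.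
  case: (H _ hz) => [->|[h|[j hj ->]]]; [by left|by right; left|right; right; exists j => //].
  by rewrite /letter_pair /bl /= E.
rewrite mem_pinv in hz; case: (H _ hz) => [e|[[h1 h2]|[j hj e]]].
- by left; case: z hz e => a b /= _ [-> ->].
- by right; left.
- right; right; exists j => //; move: e; rewrite /letter_pair /bl /= E.
  by case: z {hz} => a b /= [-> ->].
Qed.

Lemma ladder_layout_cons Q' n : (n < r)%N -> G P Q' -> ladder_on Q' n ->
  layout ((rung n, rung n.+1) :: letter_iso bl P Q')
         (letter_fix fsP fsQ bl) (letter_dir dirP dirQ bl).
Proof.
move=> hn G1 /ladder_letter_pairs clz.
have S := admissible_layout bl G1.
have hin : nth 0 (letter_fix fsP fsQ bl) kq < rung n < nth 0 (letter_fix fsP fsQ bl) kq.+1.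
  case/andP: Hkq => _ /andP[h1 _]; rewrite /letter_fix /= Hkq1 rung_ltM ?(ltnW hn) // andbT.
  exact: lt_le_trans h1 (rung0_le n).
have hk : (kq.+1 < size (letter_fix fsP fsQ bl))%N by case/andP: Hkq.
apply: (layout_cons S hk hin); last by rewrite letter_dir_bl (rung_S xK hdd).
- move=> z hz; apply/eqP => ez.
  case: (clz z hz) => [e|[[h1 h2]|[j hj e]]].
  + by move: (rung_ltM (ltnW hn)); rewrite -ez e ltxx.
  + have := layout_dir S hk hz; rewrite letter_dir_bl ez => /(_ hin) h.
    by move: (le_trans h2 (rung0_le n)); rewrite leNgt h.
  + by move: ez; rewrite e /= => /eqP; rewrite eq_le !(rung_le xK hdd) [(n <= j)%N]leqNgt hj andbF.
- move=> z hz; case: (clz z hz) => [->|[[h1 h2]|[j hj ->]]] /= zn.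
  + by move: (lt_trans zn (rung_ltM (ltnW hn))); rewrite ltxx.
  + exact: le_lt_trans h2 (rung0_lt n).
  + by apply: le_lt_trans (rung_S xK hdd _); rewrite (rung_le xK hdd).
- move=> z hz; case: (clz z hz) => [->|[[h1 h2]|[j hj ->]]] /= nz.
  + exact: rung_ltM.
  + by move: (lt_le_trans nz h1); rewrite ltNge (rung0_le n).
  + by rewrite (rung_lt xK hdd) in nz; move: (ltn_trans nz hj); rewrite ltnn.
Qed.

(* The first ladder letter cannot cancel the last letter of acc: that letter,
   if a t-letter, is the up-letter of the gap of q containing xK, i.e. bl. *)
Lemma ladder_reduced n : reduced (nseq n bl ++ acc) -> reduced (nseq n.+1 bl ++ acc).
Proof.
case: n => [|n] red /=; last first.
  by apply: reduced_cons => //; rewrite /linv /bl /=; apply/eqP => [[]]; case: (dirQ kq).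
case: acc Hred Hpok red => // l0 rest _ pok red; apply: reduced_cons => //.
case E: (l0.1); last by apply: neq_linv_gen; rewrite E.
have := pok l0 rest erefl kq; rewrite E => /(_ Hkq) e2.
by apply/eqP => e; move: e2; rewrite e /linv /bl /=; case: (dirQ kq).
Qed.

Lemma rung_ladder n : (n <= r)%N ->
  exists Q', [/\ G P Q', {subset Q <= Q'}, ladder_on Q' n,
     weval P Q' (nseq n bl ++ acc) c0 = Some (rung n) & reduced (nseq n bl ++ acc)].
Proof.
elim: n => [_|n IH hn].
  by exists Q; split=> //; [move=> z h; left|rewrite /= (rung0 xK dd)].
have [Q1 [G1 s1 cl1 ev1 red1]] := IH (ltnW hn).
have G2 := admissible_ext G1 (ladder_layout_cons hn G1 cl1).
exists (ext_t bl Q1 (rung n) (rung n.+1)); split.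
- exact: G2.
- by move=> z /s1; exact: ext_t_sub.
- move=> z; rewrite /ext_t /= inE => /orP[/eqP->|/cl1 [h|[j hj e]]]; first by right; exists n.
  + by left.
  + by right; exists j => //; apply: ltnW.
- rewrite [nseq _ _ ++ _]/= weval_cons.
  rewrite (admissible_weval_ext G2 ev1).
  by apply: (etrans (lactE _ _ _ _)); rewrite (letter_iso_ext bl P Q1) papp_head.
- exact: ladder_reduced.
Qed.

Lemma ladder_one_rung Q' n : ladder_on Q' n -> one_rung_all xK dd P Q'.
Proof.
move=> cl z; have low w : w \in P ++ Q -> one_rung xK dd w.
  by move/Hcl=> [->|[a b]]; [exact: one_rung_fix|apply: (one_rung_low hdd); rewrite (rung0 xK dd)].
rewrite mem_cat => /orP[hz|/cl [hz|[j _ ->]]]; first by apply: low; rewrite mem_cat hz.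
  by apply: low; rewrite mem_cat hz orbT.
rewrite /letter_pair /bl /=; case: (dirQ kq); first exact: one_rung_step.
exact: (one_rung_swap (one_rung_step xK hdd j)).
Qed.

End Ladder.

Lemma weval_range P Q w c d : G P Q -> m < c < M -> weval P Q w c = Some d -> m < d < M.
Proof.
move=> Gd hc; elim: w d => [|l w IH] d /=; first by case=> <-.
case E: (weval P Q w c) => [x|] //= h.
rewrite lactE in h.
exact (admissible_letter_range hP lP hQ lQ Gd (papp_mem h) (IH _ E)).
Qed.

Definition ess_list := [seq c <- coords p ++ coords q | (c != m) && (c != M)].

Lemma dminp : dmin p = m. Proof. by rewrite (layout_dmin SP). Qed.
Lemma dmaxp : dmax p = M. Proof. by rewrite (layout_dmax SP). Qed.
Lemma dminq : dmin q = m. Proof. by rewrite (layout_dmin SQ). Qed.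
Lemma dmaxq : dmax q = M. Proof. by rewrite (layout_dmax SQ). Qed.

Lemma ess_listE c : (ess p c || ess q c) = (c \in ess_list).
Proof.
rewrite /ess /ess_list mem_filter mem_cat dminp dmaxp dminq dmaxq /coords !mem_cat.
rewrite /dom /ran; case: (c != m); case: (c != M); rewrite /= ?andbF // !andbT; by rewrite orbA.
Qed.

Lemma coords_range (P : piso) fs dir c : layout P fs dir -> head 0 fs = m -> last 0 fs = M ->
  c \in coords P -> m <= c <= M.
Proof.
move=> S hh hl /coordsE [z hz [->|->]]; rewrite -hh -hl;
  [exact (layout_dom S hz)|exact (layout_ran S hz)].
Qed.

Lemma ess_list_range c : c \in ess_list -> m < c < M.
Proof.
rewrite /ess_list mem_filter => /andP[/andP[cm cM]]; rewrite mem_cat => /orP[h|h].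
  have /andP[h1 h2] := coords_range SP hP lP h.
  by rewrite !lt_neqAle h1 h2 eq_sym cm cM.
have /andP[h1 h2] := coords_range SQ hQ lQ h.
by rewrite !lt_neqAle h1 h2 eq_sym cm cM.
Qed.

Lemma liberates_p_intro P Q e rest a :
  G P Q -> (if e then p_increasing Q a M else p_decreasing Q a M) ->
  (forall c, c \in ess_list -> exists2 d, weval P Q ((true, e) :: rest) c = Some d & a < d) ->
  (forall c d z, c \in ess_list -> (forall c', c' \in ess_list -> c <= c') ->
     weval P Q ((true, e) :: rest) c = Some d -> ess P z -> z < d) ->
  liberates_p p q P Q ((true, e) :: rest).
Proof.
move=> Gd mono Hdef Hmin; have [SP' SQ' sp sq] := Gd.
split.
- by split; [| |exact: layout_piso SP'|exact: layout_piso SQ'].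
- by split; apply: layout_informative; eassumption.
- by rewrite (layout_dmin SP') (layout_dmin SQ') (layout_dmax SP') (layout_dmax SQ')
     hP hQ lP lQ dminp dminq dmaxp dmaxq.
- exists e, rest; split=> //; exists a; rewrite dmaxq; split=> // c; rewrite ess_listE => hc.
  have [d ed ad] := Hdef c hc; exists d; split=> //.
  by have /andP[_ dM] := weval_range Gd (ess_list_range hc) ed; rewrite /in_open ad dM.
- split=> c; rewrite ess_listE => hc; first by have [d ed _] := Hdef c hc; exists d.
  move=> cmin d ed z hz; apply: (Hmin c) => // c' hc'; apply: cmin; by rewrite ess_listE.
Qed.

(* Once x exceeds every old coordinate below M, in particular every fixed point
   of q below M, the gap of q containing x ends at M. *)
Lemma escape_above_ess u cmin : reduced u -> cmin \in ess_list ->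
  exists vB P Q x kq,
    [/\ G P Q, weval P Q (vB ++ u) cmin = Some x, reduced (vB ++ u),
        last_letter_up fsP fsQ dirP dirQ (vB ++ u) x
      & forall z, z \in P ++ Q -> z = (M, M) \/ (z.1 <= x /\ z.2 <= x)] /\
    [/\ m < x < M, in_gap fsQ x kq, nth 0 fsQ kq.+1 = M & forall c, c \in ess_list -> c < x].
Proof.
move=> hu hc.
have [P1 [Q1 [x1 [G1 [s1 s2] ev1 hx1]]]] :=
  admissible_path hP lP hQ lQ u admissible_base (ess_list_range hc).
set O := coords (P1 ++ Q1).
have AO z : z \in P1 ++ Q1 -> z.1 \in O /\ z.2 \in O by move/coordsP.
have fix_old g c : c \in fix_of fsP fsQ g -> c \in O.
  case: G1 => SP1 SQ1 _ _; case: g => /= hc'.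
    by case: (AO (c, c)); rewrite // mem_cat (layout_fix SQ1 hc') orbT.
  by case: (AO (c, c)); rewrite // mem_cat (layout_fix SP1 hc').
have [vB [P2 [Q2 [x [[[G2 hx BI ev2 red2] pok2] _ N0 xO]]]]] :=
  climb_above hP lP hQ lQ Hfix (c0:=cmin) fix_old G1 hx1 AO ev1 hu.
have Oless o : o \in O -> o < M -> o < x.
  move=> oO oM; rewrite lt_neqAle; apply/andP; split.
    by apply/eqP => e; move: xO; rewrite -e oO.
  by rewrite leNgt; apply/negP => xo; apply: (above_count0 N0 oO xo oM).
have ess_old c : c \in ess_list -> c \in O.
  rewrite /ess_list mem_filter mem_cat => /andP[_ /orP[] h]; apply: (coords_sub _ h) => z hz;
    by rewrite mem_cat ?(s1 z hz) ?(s2 z hz) ?orbT.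
have xQ : x \notin fsQ by apply/negP => /(fix_old true); apply/negP.
have [kq hkq] := exists_gap hP lP hQ lQ (g:=true) (layout_sorted SQ) hx xQ.
have low o : o \in O -> o < M -> o <= x by move=> oO oM; exact/ltW/Oless.
exists vB, P2, Q2, x, kq; split; split=> //.
- move=> z hz; case: (BI z hz) => [[o1 o2]|]; last by right.
  case: G2 => SP2 SQ2 _ _; move: hz; rewrite mem_cat => /orP[] hz.
  + by rewrite -lP; apply: (layout_top_or_below SP2 hz); rewrite lP; exact: low.
  + by rewrite -lQ; apply: (layout_top_or_below SQ2 hz); rewrite lQ; exact: low.
- rewrite -lQ; apply: (gap_ends_at_last (layout_sorted SQ) hkq) => f hf.
  by rewrite lQ; apply: Oless; exact: (fix_old true).
- by move=> c hc'; apply: Oless (ess_old _ hc') _; case/andP: (ess_list_range hc').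
Qed.

(* Without essential points every condition is vacuous, with J = (M, M); the sign of
   the letter t^(+-1) is only chosen so as not to cancel the first letter of u. *)
Lemma liberate_p_no_ess u : reduced u -> ess_list = [::] ->
  exists v P' Q', reduced (v ++ u) /\ liberates_p p q P' Q' (v ++ u).
Proof.
move=> hu Ene; set e := if u is l :: _ then l.2 || ~~ l.1 else true.
exists [:: (true, e)], p, q; split.
  case: u hu @e => // l0 rest hr; apply: reduced_cons => //.
  by case: l0 {hr} => [[] []].
have fixM : fixedp q M by rewrite /fixedp -lQ; exact: layout_last_fix SQ.
apply: (liberates_p_intro (a := M)); rewrite ?Ene //; first exact: admissible_base.
by case: e; split=> //; split=> // z _ /andP[a b]; have := lt_trans a b; rewrite ltxx.
Qed.

(* With n = |vB u| + 1 and rungs x = r_0 < ... < r_(n+1) = M, the word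
   t^(+-n) vB u sends the least essential point to r_n, hence every essential
   point to [r_n, M).  The other essential points start below r_0 and every letter
   moves a point by at most one rung, so the pairs added to p, all by letters of
   vB u, stay below r_n. *)
Lemma liberate_p_layout u : reduced u ->
  exists v P' Q', reduced (v ++ u) /\ liberates_p p q P' Q' (v ++ u).
Proof.
move=> hu; have [Ene|Ene] := eqVneq ess_list [::]; first exact: liberate_p_no_ess.
have [cmin cminE cminMin] := exists_seq_min Ene.
have [vB [P2 [Q2 [x [kq [[G2 ev2 red2 pok2 Hcl] [hx hkq Hkq1 ess_lt]]]]]]] :=
  escape_above_ess hu cminE.
set r := (size (vB ++ u)).+1.
have hxM : x < M by case/andP: hx.
set dd := (M - x) / (r.+1)%:R.
have hdd : 0 < dd := rung_step_gt0 r hxM.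
have Htop : rung x dd r.+1 = M := rung_top x M r.
have [Q3 [G3 _ cl3 ev3 red3]] := rung_ladder G2 Hcl hkq Hkq1 hdd Htop ev2 red2 pok2 (leqnn r).
have RA := ladder_one_rung Hcl hdd cl3.
have xr : x < rung x dd r by rewrite -[x in x < _](rung0 x dd) rung_lt.
have PB2 : s_low M x dd r P2.
  move=> z hz; have hz' : z \in P2 ++ Q2 by rewrite mem_cat hz.
  by case: (Hcl z hz') => [->|[a b]]; [left|right; split; apply: le_lt_trans xr].
have sw : s_early r (nseq r (ladder_letter kq) ++ (vB ++ u)).
  by apply: s_early_nseq => //; apply: s_early_size.
have Hcs c : c \in ess_list -> m < c < M /\ c < rung x dd 0.
  by move=> hc; rewrite rung0 ess_lt // ess_list_range.
have hNb : M <= rung x dd r.+1 by rewrite Htop.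
have [P4 [Q4 [G4 [s6 s7] [_ PB4] Hdef]]] := rung_paths hP lP hQ lQ hdd hNb G3 RA PB2 sw Hcs.
have evmin : weval P4 Q4 (nseq r (ladder_letter kq) ++ (vB ++ u)) cmin = Some (rung x dd r).
  exact: admissible_weval G4 s6 s7 ev3.
exists (nseq r (ladder_letter kq) ++ vB), P4, Q4; rewrite -catA; split=> //.
have hk : (kq.+1 < size fsQ)%N by case/andP: hkq.
case: (G4) => SP4 SQ4 _ _.
apply: (liberates_p_intro (a := nth 0 fsQ kq)) => //.
- by have := layout_gap_monotone SQ4 hk; rewrite Hkq1.
- move=> c hc; have [d ed] := Hdef c hc; exists d => //.
  have hmin := weval_mono (layout_piso SP4) (layout_piso SQ4) evmin ed (cminMin c hc).
  case/andP: hkq => _ /andP[h1 _].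
  exact: lt_le_trans h1 (le_trans (ltW xr) hmin).
- move=> c d z hc hmin; have -> : c = cmin by apply/eqP; rewrite eq_le hmin // cminMin.
  rewrite evmin => -[<-]; apply: s_low_ess PB4 _.
  by rewrite (layout_dmax SP4) lP.
Qed.

End Main.

Definition swap_letter (l : letter) : letter := (~~ l.1, l.2).
Definition swap_word (w : word) : word := map swap_letter w.

Lemma swap_wordK w : swap_word (swap_word w) = w.
Proof. by elim: w => //= [[a b] w ->]; rewrite /swap_letter /= negbK. Qed.

Lemma swap_word_cat a b : swap_word (a ++ b) = swap_word a ++ swap_word b.
Proof. exact: map_cat. Qed.

Lemma reduced_swap_word w : reduced (swap_word w) = reduced w.
Proof.
rewrite /reduced; elim: w => //= l w; case: w => //= l0 w IH.
rewrite IH; congr (_ && _); case: l l0 {IH} => a b [c d].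
by rewrite /swap_letter /linv /= !xpair_eqE; case: a; case: c.
Qed.

Lemma weval_swap_word P Q w c : weval Q P (swap_word w) c = weval P Q w c.
Proof.
elim: w => //= l w ->; case: (weval P Q w c) => //= x.
by case: l => [[] []].
Qed.

Lemma elementary_sym p q : elementary p q -> elementary q p.
Proof.
case=> [[a b] [c d] e f g]; split=> //.
move=> x; rewrite andbC -e -f; exact: g.
Qed.

Lemma liberates_q_swap p q p' q' w :
  liberates_p q p q' p' (swap_word w) -> liberates_q p q p' q' w.
Proof.
case=> [[h1 h2 h3 h4] [i1 i2] [d1 d2 d3 d4] [e [rest [ew [a [Ha Hm]]]]] [Hd Hiv]].
have EE : forall c, (ess q c || ess p c) = (ess p c || ess q c) by move=> c; rewrite orbC.
split=> //.
- exists e, (swap_word rest); split.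
    by rewrite -(swap_wordK w) ew.
  exists a; split=> //.
  move=> c hc; rewrite -weval_swap_word; apply: Ha; by rewrite EE.
- split.
    by move=> c hc; rewrite -weval_swap_word; apply: Hd; rewrite EE.
  move=> c hc Hmin d ed; apply: (Hiv c); first by rewrite EE.
    by move=> c' hc'; apply: Hmin; rewrite -EE.
  by rewrite weval_swap_word.
Qed.

Lemma liberate_p p q u : elementary p q -> reduced u ->
  exists v p' q', reduced (v ++ u) /\ liberates_p p q p' q' (v ++ u).
Proof.
move=> el; have [fsP [dirP [fsQ [dirQ [SP SQ [hP lP] [hQ lQ] fixc]]]]] := elementary_layouts el.
exact: liberate_p_layout SP SQ hP lP hQ lQ fixc u.
Qed.

Theorem lemma3p9 (p q : piso) (u : word) :
  elementary p q -> reduced u ->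
  (exists (v : word) (p' q' : piso),
      wlen (v ++ u) = (wlen v + wlen u)%N /\
      liberates_p p q p' q' (reduce (v ++ u))) /\
  (exists (v : word) (p' q' : piso),
      wlen (v ++ u) = (wlen v + wlen u)%N /\
      liberates_q p q p' q' (reduce (v ++ u))).
Proof.
move=> el hu; split.
  have [v [p' [q' [hr hl]]]] := liberate_p el hu.
  by exists v, p', q'; rewrite wlen_cat // reduce_reduced.
have hu' : reduced (swap_word u) by rewrite reduced_swap_word.
have [v [q' [p' [hr hl]]]] := liberate_p (elementary_sym el) hu'.
have hr' : reduced (swap_word v ++ u) by rewrite -reduced_swap_word swap_word_cat swap_wordK.
exists (swap_word v), p', q'; rewrite wlen_cat // reduce_reduced //; split=> //.
apply: liberates_q_swap; by rewrite swap_word_cat swap_wordK.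
Qed.
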